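(* Assume the standing setup, fix $\omega\in\Omega$ and $(\hat x_0,\hat y_0)\in\mathbb{R}^n\times\mathbb{R}^m$, and let $\eta>0$ with $b<\eta<a$ satisfy $\rho:=\frac{K}{a-\eta}+\frac{K}{\eta-b}<1$. Then for every $u_0\in\mathbb{R}^n$ the integral system $$u(t)=e^{At+\int_0^t z(\theta_\tau\omega)d\tau}u_0+\int_0^t e^{A(t-s)+\int_s^t z(\theta_\tau\omega)d\tau}\Delta F(u(s),v(s),\theta_s\omega)\,ds,\quad v(t)=\int_{-\infty}^t e^{B(t-s)+\int_s^t z(\theta_\tau\omega)d\tau}\Delta G(u(s),v(s),\theta_s\omega)\,ds,\quad t\le 0,$$ has a unique solution $\phi(\cdot)=\phi(\cdot,\omega,(\hat x_0,\hat y_0);u_0)=(u,v)$ in $C^-_\eta$.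
   Context: Standing setup: $1<\alpha<2$; $\Omega$ is a $\{\theta_t\}$-invariant full-measure set of càdlàg paths $\omega:\mathbb{R}\to\mathbb{R}$ ($\omega(0)=0$) of a two-sided scalar symmetric $\alpha$-stable Lévy motion, with $\theta_t\omega=\omega(\cdot+t)-\omega(t)$, on which $z(\omega)=-\int_{-\infty}^0e^\tau\omega(\tau)d\tau$ exists, $t\mapsto z(\theta_t\omega)$ is càdlàg, $\lim_{t\to\pm\infty}|z(\theta_t\omega)|/|t|=0$ and $\lim_{t\to\pm\infty}\frac1t\int_0^tz(\theta_\tau\omega)d\tau=0$. (A1) $A$ is a real $n\times n$ matrix and $B$ a real $m\times m$ matrix with $|e^{At}x|\le e^{at}|x|$ for $t\le0$ and $|e^{Bt}y|\le e^{bt}|y|$ for $t\ge 0$, where $b<0<a$. (A2) $f:\mathbb{R}^n\times\mathbb{R}^m\to\mathbb{R}^n$, $g:\mathbb{R}^n\times\mathbb{R}^m\to\mathbb{R}^m$ satisfy $f(0,0)=0$, $g(0,0)=0$, $|f(x_1,y_1)-f(x_2,y_2)|\le K(|x_1-x_2|+|y_1-y_2|)$ and the same for $g$. Put $F(x,y,\omega)=e^{-z(\omega)}f(e^{z(\omega)}x,e^{z(\omega)}y)$, $G(x,y,\omega)=e^{-z(\omega)}g(e^{z(\omega)}x,e^{z(\omega)}y)$. The random system (RDE) is $\frac{d\hat x}{dt}=A\hat x+F(\hat x,\hat y,\theta_t\omega)+z(\theta_t\omega)\hat x$, $\frac{d\hat y}{dt}=B\hat y+G(\hat x,\hat y,\theta_t\omega)+z(\theta_t\omega)\hat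 y$; $\varphi(t,\omega,(\hat x_0,\hat y_0))=(\hat x(t),\hat y(t))$ denotes its (Carathéodory) solution, defined for all $t\in\mathbb{R}$, with $(\hat x(0),\hat y(0))=(\hat x_0,\hat y_0)$. $|\cdot|$ is the Euclidean norm. For fixed $\omega$ and $\eta\in\mathbb{R}$, $C^-_\eta$ is the Banach space of continuous $\phi=(u,v):(-\infty,0]\to\mathbb{R}^n\times\mathbb{R}^m$ with $\|\phi\|_{C^-_\eta}=\sup_{t\le0}e^{-\eta t-\int_0^tz(\theta_\tau\omega)d\tau}|u(t)|+\sup_{t\le0}e^{-\eta t-\int_0^tz(\theta_\tau\omega)d\tau}|v(t)|<\infty$. Given a base point $(\hat x_0,\hat y_0)$ with orbit $(\hat x(t),\hat y(t))=\varphi(t,\omega,(\hat x_0,\hat y_0))$, define $\Delta F(u,v,\theta_t\omega)=F(u+\hat x(t),v+\hat y(t),\theta_t\omega)-F(\hat x(t),\hat y(t),\theta_t\omega)$ and $\Delta G$ analogously with $G$. *)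

From Stdlib Require Import Reals Lra ClassicalEpsilon.
From Stdlib Require Fin.
Open Scope R_scope.

Definition vec (n : nat) := Fin.t n -> R.
Definition mat (n : nat) := Fin.t n -> Fin.t n -> R.

Fixpoint fsum (n : nat) : (Fin.t n -> R) -> R :=
  match n return (Fin.t n -> R) -> R with
  | O => fun _ => 0
  | S k => fun f => f Fin.F1 + fsum k (fun i => f (Fin.FS i))
  end.

Definition vzero {n} : vec n := fun _ => 0.
Definition vadd {n} (x y : vec n) : vec n := fun i => x i + y i.
Definition vsub {n} (x y : vec n) : vec n := fun i => x i - y i.
Definition vscale {n} (c : R) (x : vec n) : vec n := fun i => c * x i.
Definition vnorm {n} (x : vec n) : R := sqrt (fsum n (fun i => (x i) ^ 2)).

Definition mvmul {n} (A : mat n) (x : vec n) : vec n :=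
  fun i => fsum n (fun j => A i j * x j).
Definition mmul {n} (A B : mat n) : mat n :=
  fun i j => fsum n (fun k => A i k * B k j).
Definition mid {n} : mat n :=
  fun i j => if Fin.eq_dec i j then 1 else 0.
Fixpoint mpow {n} (A : mat n) (k : nat) : mat n :=
  match k with O => mid | S k' => mmul A (mpow A k') end.

(* Matrix exponential e^{At} = sum_k t^k A^k / k!  (entrywise limit of the
   partial sums; the series always converges, so this picks its sum). *)
Definition mexp {n} (A : mat n) (t : R) : mat n :=
  fun i j => epsilon (inhabits 0)
    (fun l => Un_cv (fun N => sum_f_R0 (fun k => t ^ k / INR (Factorial.fact k) * mpow A k i j) N) l).

Definition has_RInt (f : R -> R) (a b I : R) : Prop :=
  exists pr : Riemann_integrable f a b, RiemannInt pr = I.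
(* The value of the Riemann integral (meaningful when f is integrable). *)
Definition RInt (f : R -> R) (a b : R) : R :=
  epsilon (inhabits 0) (has_RInt f a b).
Definition vhas_RInt {n} (g : R -> vec n) (a b : R) (I : vec n) : Prop :=
  forall i, has_RInt (fun s => g s i) a b (I i).
Definition has_improper_lower (f : R -> R) (t l : R) : Prop :=
  (forall T, T <= t -> inhabited (Riemann_integrable f T t)) /\
  (forall eps, 0 < eps -> exists M, forall T, T <= M ->
      Rabs (RInt f T t - l) < eps).

(* ---------- The noise path t |-> z(theta_t omega) ---------- *)
Definition cadlag (zeta : R -> R) : Prop :=
  forall t,
    (forall eps, 0 < eps -> exists d, 0 < d /\
        forall s, t <= s < t + d -> Rabs (zeta s - zeta t) < eps) /\
    (exists l, forall eps, 0 < eps -> exists d, 0 < d /\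
        forall s, t - d < s < t -> Rabs (zeta s - l) < eps).

Definition sublinear (zeta : R -> R) : Prop :=
  forall eps, 0 < eps -> exists M, 0 < M /\
    forall t, M <= Rabs t -> Rabs (zeta t) / Rabs t < eps.

Definition zero_mean (zeta : R -> R) : Prop :=
  forall eps, 0 < eps -> exists M, 0 < M /\
    forall t, M <= Rabs t -> Rabs (RInt zeta 0 t / t) < eps.

Definition lipschitz {n m p} (h : vec n -> vec m -> vec p) (K : R) : Prop :=
  forall x1 y1 x2 y2,
    vnorm (vsub (h x1 y1) (h x2 y2)) <= K * (vnorm (vsub x1 x2) + vnorm (vsub y1 y2)).

Definition Ftr {n m p} (h : vec n -> vec m -> vec p) (zeta : R -> R)
  (x : vec n) (y : vec m) (t : R) : vec p :=
  vscale (exp (- zeta t)) (h (vscale (exp (zeta t)) x) (vscale (exp (zeta t)) y)).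

(* (xh, yh) is the (Caratheodory) solution of the RDE through (x0,y0) at time 0,
   defined for all t, written in integral form. *)
Definition RDE_solution {n m} (A : mat n) (B : mat m)
  (f : vec n -> vec m -> vec n) (g : vec n -> vec m -> vec m) (zeta : R -> R)
  (x0 : vec n) (y0 : vec m) (xh : R -> vec n) (yh : R -> vec m) : Prop :=
  forall t,
    vhas_RInt (fun s => vadd (vadd (mvmul A (xh s)) (Ftr f zeta (xh s) (yh s) s))
                             (vscale (zeta s) (xh s))) 0 t (vsub (xh t) x0) /\
    vhas_RInt (fun s => vadd (vadd (mvmul B (yh s)) (Ftr g zeta (xh s) (yh s) s))
                             (vscale (zeta s) (yh s))) 0 t (vsub (yh t) y0).

Definition DeltaF {n m p} (h : vec n -> vec m -> vec p) (zeta : R -> R)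
  (xh : R -> vec n) (yh : R -> vec m) (u : vec n) (v : vec m) (t : R) : vec p :=
  vsub (Ftr h zeta (vadd u (xh t)) (vadd v (yh t)) t) (Ftr h zeta (xh t) (yh t) t).

Definition cminus_weight (zeta : R -> R) (eta t : R) : R :=
  exp (- eta * t - RInt zeta 0 t).

Definition cont_neg {n} (u : R -> vec n) : Prop :=
  forall t, t <= 0 -> forall eps, 0 < eps -> exists d, 0 < d /\
    forall s, s <= 0 -> Rabs (s - t) < d -> vnorm (vsub (u s) (u t)) < eps.

Definition in_Cminus {n m} (zeta : R -> R) (eta : R) (u : R -> vec n) (v : R -> vec m) : Prop :=
  cont_neg u /\ cont_neg v /\
  (exists M, forall t, t <= 0 -> cminus_weight zeta eta t * vnorm (u t) <= M) /\
  (exists M, forall t, t <= 0 -> cminus_weight zeta eta t * vnorm (v t) <= M).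

Definition solves_IS {n m} (A : mat n) (B : mat m)
  (f : vec n -> vec m -> vec n) (g : vec n -> vec m -> vec m) (zeta : R -> R)
  (xh : R -> vec n) (yh : R -> vec m) (u0 : vec n)
  (u : R -> vec n) (v : R -> vec m) : Prop :=
  forall t, t <= 0 ->
    (exists I : vec n,
        vhas_RInt (fun s => vscale (exp (RInt zeta s t))
                    (mvmul (mexp A (t - s)) (DeltaF f zeta xh yh (u s) (v s) s))) 0 t I /\
        u t = vadd (vscale (exp (RInt zeta 0 t)) (mvmul (mexp A t) u0)) I) /\
    (forall i, has_improper_lower
        (fun s => vscale (exp (RInt zeta s t))
                    (mvmul (mexp B (t - s)) (DeltaF g zeta xh yh (u s) (v s) s)) i)
        t (v t i)).

From Pilot Require Import Defs.
From Stdlib Require Import Reals Lra Lia ClassicalEpsilon FunctionalExtensionality.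
From Coquelicot Require Import Coquelicot.
Open Scope R_scope.

(* The integral system is the fixed-point equation [(u, v) = T (u, v)] of a Lyapunov-Perron
   operator [T].  The dichotomy bounds on [e^{At}] ([t <= 0]) and [e^{Bt}] ([t >= 0]) and the
   Lipschitz bound on [Delta F], [Delta G] make [T] a contraction with constant
   [rho = K / (a - eta) + K / (eta - b)] for the weighted sup-distance of [C^-_eta]: the weight
   [e^{- eta t - int_0^t z}] exactly absorbs the factor [e^{int_s^t z}] of the kernels.
   Uniqueness follows at once; existence by Picard iteration from [0], whose iterates converge
   locally uniformly on [(-oo, 0]] to a continuous fixed point.  The kernels are only cadlag in
   [s] (through [z]), so Riemann integrability is proved for cadlag functions. *)

(** * Finite sums and the Euclidean norm *)

Lemma fsum_ext n (f g : Fin.t n -> R) : (forall i, f i = g i) -> fsum n f = fsum n g.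
Proof.
  induction n; simpl; intros H; auto.
  rewrite H, (IHn (fun i => f (Fin.FS i)) (fun i => g (Fin.FS i))); auto.
Qed.

Lemma fsum_add n (f g : Fin.t n -> R) : fsum n (fun i => f i + g i) = fsum n f + fsum n g.
Proof. induction n; simpl. lra. rewrite (IHn (fun i => f (Fin.FS i)) (fun i => g (Fin.FS i))). lra. Qed.

Lemma fsum_scal n (c : R) (f : Fin.t n -> R) : fsum n (fun i => c * f i) = c * fsum n f.
Proof. induction n; simpl. lra. rewrite (IHn (fun i => f (Fin.FS i))). lra. Qed.

Lemma fsum_sub n (f g : Fin.t n -> R) : fsum n (fun i => f i - g i) = fsum n f - fsum n g.
Proof.
  rewrite (fsum_ext _ _ (fun i => f i + (-1) * g i)) by (intros; ring).
  rewrite fsum_add, fsum_scal. ring.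
Qed.

Lemma fsum_const0 n : fsum n (fun _ => 0) = 0.
Proof. induction n; simpl; auto. rewrite IHn; lra. Qed.

Lemma fsum_le n (f g : Fin.t n -> R) : (forall i, f i <= g i) -> fsum n f <= fsum n g.
Proof.
  induction n; simpl; intros H. lra.
  pose proof (H Fin.F1).
  pose proof (IHn (fun i => f (Fin.FS i)) (fun i => g (Fin.FS i)) (fun i => H (Fin.FS i))). lra.
Qed.

Lemma fsum_nonneg n (f : Fin.t n -> R) : (forall i, 0 <= f i) -> 0 <= fsum n f.
Proof. intros H. rewrite <- (fsum_const0 n). apply fsum_le. auto. Qed.

Lemma fsum_const_le n (f : Fin.t n -> R) c : (forall i, f i <= c) -> fsum n f <= INR n * c.
Proof.
  intros H. eapply Rle_trans. apply (fsum_le _ _ (fun _ => c)). auto.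
  clear. induction n; simpl fsum. simpl; lra. rewrite S_INR. lra.
Qed.

Lemma Rabs_fsum_le n (f : Fin.t n -> R) : Rabs (fsum n f) <= fsum n (fun i => Rabs (f i)).
Proof.
  induction n; simpl. rewrite Rabs_R0; lra.
  eapply Rle_trans. apply Rabs_triang. specialize (IHn (fun i => f (Fin.FS i))). lra.
Qed.

Lemma fsum_ge_term n (f : Fin.t n -> R) i : (forall j, 0 <= f j) -> f i <= fsum n f.
Proof.
  induction n. inversion i.
  intros H. simpl. revert f H. pattern i. apply Fin.caseS'.
  - intros f H. pose proof (fsum_nonneg n (fun i => f (Fin.FS i)) (fun j => H (Fin.FS j))). lra.
  - intros p f H. pose proof (IHn (fun i => f (Fin.FS i)) p (fun j => H (Fin.FS j))).
    pose proof (H Fin.F1). simpl in *. lra.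
Qed.

Lemma fsum_exchange n m (f : Fin.t n -> Fin.t m -> R) :
  fsum n (fun i => fsum m (fun j => f i j)) = fsum m (fun j => fsum n (fun i => f i j)).
Proof.
  revert m f. induction n; intros m f; simpl.
  - rewrite fsum_const0; auto.
  - rewrite IHn, <- fsum_add. auto.
Qed.

Lemma fsum_sum_f_R0 n (f : Fin.t n -> nat -> R) N :
  fsum n (fun i => sum_f_R0 (fun k => f i k) N) = sum_f_R0 (fun k => fsum n (fun i => f i k)) N.
Proof. induction N; simpl. auto. rewrite fsum_add, IHN. auto. Qed.

Lemma fsum_kronecker n (i : Fin.t n) (g : Fin.t n -> R) :
  fsum n (fun k => (if Fin.eq_dec i k then 1 else 0) * g k) = g i.
Proof.
  induction n. inversion i. revert g. pattern i. apply Fin.caseS'.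
  - intros g. simpl. destruct (Fin.eq_dec Fin.F1 Fin.F1) as [_|C]; [|congruence].
    rewrite (fsum_ext _ _ (fun _ => 0)), fsum_const0. lra.
    intros k. destruct (Fin.eq_dec Fin.F1 (Fin.FS k)) as [C|_]. inversion C. lra.
  - intros p g. simpl. destruct (Fin.eq_dec (Fin.FS p) Fin.F1) as [C|_]. inversion C.
    rewrite <- (IHn p (fun k => g (Fin.FS k))), Rmult_0_l, Rplus_0_l. apply fsum_ext.
    intros k. destruct (Fin.eq_dec (Fin.FS p) (Fin.FS k)) as [E|E];
      destruct (Fin.eq_dec p k) as [E'|E']; auto.
    + apply Fin.FS_inj in E. contradiction.
    + subst. contradiction.
Qed.

Lemma fsum_mul_abs_le n (c x : Fin.t n -> R) B : (forall j, Rabs (x j) <= B) ->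
  Rabs (fsum n (fun j => c j * x j)) <= fsum n (fun j => Rabs (c j)) * B.
Proof.
  intros H. eapply Rle_trans. apply Rabs_fsum_le. rewrite Rmult_comm, <- fsum_scal.
  apply fsum_le. intros j. rewrite Rabs_mult, (Rmult_comm B).
  apply Rmult_le_compat_l. apply Rabs_pos. auto.
Qed.

Lemma vnorm_ext n (x y : vec n) : (forall i, x i = y i) -> vnorm x = vnorm y.
Proof. intros H. unfold vnorm. f_equal. apply fsum_ext. intros; rewrite H; auto. Qed.

Lemma vnorm_ge0 n (x : vec n) : 0 <= vnorm x.
Proof. apply sqrt_pos. Qed.

Lemma vnorm_vzero n : vnorm (@vzero n) = 0.
Proof.
  unfold vnorm, vzero. rewrite (fsum_ext _ _ (fun _ => 0)) by (intros; ring).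
  rewrite fsum_const0. apply sqrt_0.
Qed.

Lemma vnorm_sq n (x : vec n) : vnorm x * vnorm x = fsum n (fun i => x i ^ 2).
Proof. apply sqrt_sqrt, fsum_nonneg. intros; apply pow2_ge_0. Qed.

Lemma Rabs_coord_le_vnorm n (x : vec n) i : Rabs (x i) <= vnorm x.
Proof.
  unfold vnorm. rewrite <- sqrt_Rsqr_abs. apply sqrt_le_1_alt. unfold Rsqr.
  replace (x i * x i) with (x i ^ 2) by ring.
  apply (fsum_ge_term n (fun i => x i ^ 2)). intros; apply pow2_ge_0.
Qed.

Lemma vnorm_le_fsum_abs n (x : vec n) : vnorm x <= fsum n (fun i => Rabs (x i)).
Proof.
  unfold vnorm.
  assert (H0 : 0 <= fsum n (fun i => Rabs (x i))) by (apply fsum_nonneg; intros; apply Rabs_pos).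
  rewrite <- (sqrt_Rsqr _ H0). apply sqrt_le_1_alt. unfold Rsqr. clear H0.
  induction n; simpl. lra.
  specialize (IHn (fun i => x (Fin.FS i))). simpl in IHn.
  assert (0 <= Rabs (x Fin.F1) * fsum n (fun i => Rabs (x (Fin.FS i)))).
  { apply Rmult_le_pos. apply Rabs_pos. apply fsum_nonneg; intros; apply Rabs_pos. }
  assert (x Fin.F1 ^ 2 = Rabs (x Fin.F1) * Rabs (x Fin.F1)).
  { rewrite <- Rabs_mult, Rabs_right. ring. nra. }
  nra.
Qed.

Lemma vnorm_le_dim_mul n (x : vec n) c : (forall i, Rabs (x i) <= c) -> vnorm x <= INR n * c.
Proof. intros H. eapply Rle_trans. apply vnorm_le_fsum_abs. apply fsum_const_le. auto. Qed.

Lemma vnorm_scale n c (x : vec n) : vnorm (vscale c x) = Rabs c * vnorm x.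
Proof.
  unfold vnorm, vscale. rewrite (fsum_ext _ _ (fun i => c ^ 2 * x i ^ 2)) by (intros; ring).
  rewrite fsum_scal, sqrt_mult, <- sqrt_Rsqr_abs. unfold Rsqr. f_equal. f_equal. ring.
  apply pow2_ge_0. apply fsum_nonneg. intros; apply pow2_ge_0.
Qed.

Lemma vnorm_eq0_coord n (x : vec n) : vnorm x = 0 -> forall i, x i = 0.
Proof.
  intros H i. pose proof (Rabs_coord_le_vnorm n x i). pose proof (Rabs_pos (x i)). rewrite H in *.
  destruct (Req_dec (x i) 0) as [E|E]; auto. pose proof (Rabs_pos_lt (x i) E). lra.
Qed.

Lemma vsub_vnorm_eq0 n (x y : vec n) : vnorm (vsub x y) = 0 -> x = y.
Proof.
  intros H. apply functional_extensionality. intros i.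
  pose proof (vnorm_eq0_coord n _ H i). unfold vsub in *. lra.
Qed.

Lemma cauchy_schwarz n (x y : vec n) : fsum n (fun i => x i * y i) <= vnorm x * vnorm y.
Proof.
  destruct (Req_dec (vnorm x) 0) as [Hx|Hx].
  { rewrite (fsum_ext _ _ (fun _ => 0)), fsum_const0, Hx. lra.
    intros i. rewrite (vnorm_eq0_coord n x Hx i). ring. }
  destruct (Req_dec (vnorm y) 0) as [Hy|Hy].
  { rewrite (fsum_ext _ _ (fun _ => 0)), fsum_const0, Hy. lra.
    intros i. rewrite (vnorm_eq0_coord n y Hy i). ring. }
  pose proof (vnorm_ge0 n x). pose proof (vnorm_ge0 n y).
  set (a := vnorm x) in *. set (b := vnorm y) in *.
  (* expand [0 <= |b x - a y|^2] *)
  assert (HH : 0 <= fsum n (fun i => (b * x i - a * y i) ^ 2))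
    by (apply fsum_nonneg; intros; apply pow2_ge_0).
  rewrite (fsum_ext _ _ (fun i => b^2 * x i ^2 + (- 2 * a * b) * (x i * y i) + a ^ 2 * y i ^ 2))
    in HH by (intros; ring).
  rewrite !fsum_add, !fsum_scal, <- (vnorm_sq n x), <- (vnorm_sq n y) in HH. fold a b in HH.
  assert (0 < a * b) by (apply Rmult_lt_0_compat; lra).
  nra.
Qed.

Lemma vnorm_triangle n (x y : vec n) : vnorm (vadd x y) <= vnorm x + vnorm y.
Proof.
  pose proof (vnorm_ge0 n x). pose proof (vnorm_ge0 n y). pose proof (vnorm_ge0 n (vadd x y)).
  apply Rsqr_incr_0_var; [|lra]. unfold Rsqr. rewrite vnorm_sq. unfold vadd.
  rewrite (fsum_ext _ _ (fun i => x i ^ 2 + 2 * (x i * y i) + y i ^ 2)) by (intros; ring).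
  rewrite !fsum_add, fsum_scal, <- !vnorm_sq. pose proof (cauchy_schwarz n x y). nra.
Qed.

Lemma vnorm_sub_sym n (x y : vec n) : vnorm (vsub x y) = vnorm (vsub y x).
Proof. unfold vnorm, vsub. f_equal. apply fsum_ext. intros; ring. Qed.

Lemma vnorm_sub_triangle n (x y z : vec n) :
  vnorm (vsub x z) <= vnorm (vsub x y) + vnorm (vsub y z).
Proof.
  eapply Rle_trans; [|apply vnorm_triangle].
  right. apply vnorm_ext. intros; unfold vsub, vadd; ring.
Qed.

Lemma vnorm_sub_le n (x y : vec n) : vnorm (vsub x y) <= vnorm x + vnorm y.
Proof.
  rewrite (vnorm_ext _ _ (vadd x (vscale (-1) y))) by (intros; unfold vsub, vadd, vscale; ring).
  eapply Rle_trans. apply vnorm_triangle. rewrite vnorm_scale.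
  replace (Rabs (-1)) with 1 by (rewrite Rabs_left; lra). lra.
Qed.

Lemma vnorm_le_sub n (x y : vec n) : vnorm x <= vnorm y + vnorm (vsub x y).
Proof.
  rewrite (vnorm_ext _ x (vadd y (vsub x y))) by (intros; unfold vadd, vsub; ring).
  apply vnorm_triangle.
Qed.

Lemma mvmul_vsub n (E : mat n) x1 x2 :
  vsub (mvmul E x1) (mvmul E x2) = mvmul E (vsub x1 x2).
Proof.
  apply functional_extensionality. intros i. unfold mvmul, vsub.
  rewrite <- fsum_sub. apply fsum_ext. intros; ring.
Qed.

Lemma vscale_vsub n c (x y : vec n) : vsub (vscale c x) (vscale c y) = vscale c (vsub x y).
Proof. apply functional_extensionality. intros i. unfold vsub, vscale. ring. Qed.

(** * The matrix exponential *)

Section MatrixPowers.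
Variables (n : nat) (A : mat n).

Lemma mpow_add p q i j : mpow A (p + q) i j = mmul (mpow A p) (mpow A q) i j.
Proof.
  revert i j. induction p; intros i j; simpl.
  - unfold mmul, mid. rewrite fsum_kronecker. auto.
  - unfold mmul at 1.
    rewrite (fsum_ext _ _ (fun k => A i k * fsum n (fun l => mpow A p k l * mpow A q l j)))
      by (intros; rewrite IHp; auto).
    unfold mmul. rewrite (fsum_ext _ _ (fun k => fsum n (fun l => A i k * mpow A p k l * mpow A q l j))).
    2:{ intros k. rewrite <- fsum_scal. apply fsum_ext. intros; ring. }
    rewrite fsum_exchange. apply fsum_ext. intros l.
    rewrite Rmult_comm, <- fsum_scal. apply fsum_ext. intros; ring.
Qed.

Definition mabs_sum := fsum n (fun i => fsum n (fun j => Rabs (A i j))).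

Lemma mabs_sum_ge0 : 0 <= mabs_sum.
Proof. apply fsum_nonneg; intros; apply fsum_nonneg; intros; apply Rabs_pos. Qed.

Lemma Rabs_mpow_le k i j : Rabs (mpow A k i j) <= mabs_sum ^ k.
Proof.
  revert i j. induction k; intros i j; simpl.
  - unfold mid. destruct (Fin.eq_dec i j); rewrite ?Rabs_R1, ?Rabs_R0; lra.
  - unfold mmul. eapply Rle_trans. apply Rabs_fsum_le.
    eapply Rle_trans. apply (fsum_le _ _ (fun l => Rabs (A i l) * mabs_sum ^ k)).
    { intros l. rewrite Rabs_mult. apply Rmult_le_compat_l. apply Rabs_pos. auto. }
    rewrite (fsum_ext _ _ (fun l => mabs_sum ^ k * Rabs (A i l))) by (intros; ring).
    rewrite fsum_scal, Rmult_comm. apply Rmult_le_compat_r. apply pow_le, mabs_sum_ge0.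
    apply (fsum_ge_term n (fun i => fsum n (fun j => Rabs (A i j)))).
    intros; apply fsum_nonneg; intros; apply Rabs_pos.
Qed.

Definition mexp_term t i j k := t ^ k / INR (Factorial.fact k) * mpow A k i j.

Lemma Rabs_mexp_term_le t i j k :
  Rabs (mexp_term t i j k) <= (Rabs t * mabs_sum) ^ k / INR (Factorial.fact k).
Proof.
  unfold mexp_term. rewrite Rabs_mult. unfold Rdiv. rewrite Rabs_mult, <- RPow_abs.
  assert (Hf : 0 <= / INR (Factorial.fact k)) by (left; apply Rinv_0_lt_compat, INR_fact_lt_0).
  rewrite (Rabs_right (/ _)), Rpow_mult_distr by lra. pose proof (Rabs_mpow_le k i j).
  assert (0 <= Rabs t ^ k) by (apply pow_le, Rabs_pos).
  replace (Rabs t ^ k * mabs_sum ^ k * / INR (Factorial.fact k))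
    with (Rabs t ^ k * / INR (Factorial.fact k) * mabs_sum ^ k) by ring.
  apply Rmult_le_compat_l; auto. apply Rmult_le_pos; auto.
Qed.

Lemma ex_series_Rabs_mexp_term t i j : ex_series (fun k => Rabs (mexp_term t i j k)).
Proof.
  eapply (@ex_series_le R_AbsRing R_CompleteNormedModule).
  { intros k. unfold norm; simpl. unfold abs; simpl.
    rewrite Rabs_Rabsolu. apply Rabs_mexp_term_le. }
  exists (exp (Rabs t * mabs_sum)). pose proof (is_exp_Reals (Rabs t * mabs_sum)) as H.
  eapply is_series_ext; [|exact H]. intros k. simpl. unfold scal; simpl. unfold mult; simpl.
  rewrite pow_n_pow. unfold Rdiv; ring.
Qed.

Lemma is_series_mexp t i j : is_series (mexp_term t i j) (mexp A t i j).
Proof.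
  destruct (ex_series_Rabs _ (ex_series_Rabs_mexp_term t i j)) as [l Hl].
  assert (Hu : Un_cv (fun N => sum_f_R0 (fun k => t ^ k / INR (Factorial.fact k) * mpow A k i j) N) l)
    by (apply is_series_Reals in Hl; exact Hl).
  unfold mexp. pose proof (epsilon_spec (inhabits 0) (fun l => Un_cv (fun N =>
    sum_f_R0 (fun k => t ^ k / INR (Factorial.fact k) * mpow A k i j) N) l) (ex_intro _ l Hu)) as Hs.
  cbv beta in Hs. rewrite (UL_sequence _ _ _ Hs Hu). exact Hl.
Qed.

Lemma mexp_continuous i j t : continuity_pt (fun t => mexp A t i j) t.
Proof.
  set (c := fun k => mpow A k i j / INR (Factorial.fact k)).
  assert (E : (fun t => mexp A t i j) = PSeries c).
  { apply functional_extensionality. intros x. unfold PSeries. symmetry. apply is_series_unique.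
    eapply is_series_ext; [|apply is_series_mexp]. intros k.
    change (mexp_term x i j k = c k * x ^ k). unfold mexp_term, c, Rdiv; ring. }
  rewrite E. apply PSeries_continuity.
  destruct (CV_radius_bounded c) as [Hub _].
  eapply Rbar_lt_le_trans; [|apply (Hub (Rabs t + 1))]. simpl; lra.
  exists (exp (Rabs (Rabs t + 1) * mabs_sum)). intros k.
  replace (c k * (Rabs t + 1) ^ k) with (mexp_term (Rabs t + 1) i j k)
    by (unfold c, mexp_term, Rdiv; ring).
  eapply Rle_trans. apply Rabs_mexp_term_le.
  eapply Rle_trans; [|apply (exp_ge_taylor _ k)].
  2:{ apply Rmult_le_pos; [apply Rabs_pos|apply mabs_sum_ge0]. }
  destruct k. simpl. lra. rewrite tech5.
  match goal with |- ?x <= ?s + ?x => enough (0 <= s) by lra end.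
  apply cond_pos_sum. intros. apply Rmult_le_pos.
  apply pow_le, Rmult_le_pos; [apply Rabs_pos|apply mabs_sum_ge0].
  left; apply Rinv_0_lt_compat, INR_fact_lt_0.
Qed.

End MatrixPowers.

Lemma is_series_fsum m (c : Fin.t m -> nat -> R) (L : Fin.t m -> R) :
  (forall l, is_series (c l) (L l)) -> is_series (fun N => fsum m (fun l => c l N)) (fsum m L).
Proof.
  induction m; intros H; simpl.
  - apply is_series_Reals. intros eps He. exists 0%nat. intros k _.
    rewrite sum_cte. unfold Rdist. rewrite Rmult_0_l, Rminus_0_r, Rabs_R0. lra.
  - apply (is_series_plus (c Fin.F1) (fun N => fsum m (fun l => c (Fin.FS l) N))). auto.
    apply (IHm (fun l => c (Fin.FS l)) (fun l => L (Fin.FS l))). auto.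
Qed.

Lemma binomial_div_fact t s N : (t + s) ^ N / INR (Factorial.fact N) =
  sum_f_R0 (fun k => t ^ k / INR (Factorial.fact k) * (s ^ (N - k) / INR (Factorial.fact (N - k)))) N.
Proof.
  rewrite binomial. unfold Rdiv. rewrite Rmult_comm, scal_sum. apply sum_eq. intros k Hk.
  unfold Binomial.C. pose proof (INR_fact_neq_0 N). pose proof (INR_fact_neq_0 k).
  pose proof (INR_fact_neq_0 (N - k)). field. auto.
Qed.

(* The Cauchy product of the two exponential series. *)
Lemma mexp_add {n} (A : mat n) t s i j :
  mexp A (t + s) i j = fsum n (fun l => mexp A t i l * mexp A s l j).
Proof.
  assert (H : forall l, is_series
    (fun N => sum_f_R0 (fun k => mexp_term n A t i l k * mexp_term n A s l j (N - k)%nat) N)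
    (mexp A t i l * mexp A s l j)).
  { intros l. apply is_series_mult; try apply is_series_mexp; apply ex_series_Rabs_mexp_term. }
  pose proof (is_series_fsum n _ _ H) as H2. apply is_series_unique in H2.
  rewrite <- H2. symmetry. apply is_series_unique.
  eapply is_series_ext; [|apply (is_series_mexp n A (t + s) i j)].
  intros N. rewrite fsum_sum_f_R0. unfold mexp_term at 1.
  rewrite binomial_div_fact, Rmult_comm, scal_sum. apply sum_eq. intros k Hk. unfold mexp_term.
  rewrite (fsum_ext _ _ (fun l => (t ^ k / INR (Factorial.fact k) * (s ^ (N - k) / INR (Factorial.fact (N - k))))
                                   * (mpow A k i l * mpow A (N - k) l j))) by (intros; ring).
  rewrite fsum_scal. f_equal. replace N with (k + (N - k))%nat at 1 by lia. apply mpow_add.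
Qed.

Lemma mvmul_mexp_sub {n} (A : mat n) t s x :
  mvmul (mexp A (t - s)) x = mvmul (mexp A t) (mvmul (mexp A (- s)) x).
Proof.
  apply functional_extensionality. intros i. unfold mvmul, Rminus.
  rewrite (fsum_ext _ _ (fun j => fsum n (fun l => mexp A t i l * mexp A (- s) l j * x j))).
  2:{ intros j. rewrite mexp_add, (Rmult_comm _ (x j)), <- fsum_scal. apply fsum_ext; intros; ring. }
  rewrite fsum_exchange. apply fsum_ext. intros l. rewrite <- fsum_scal. apply fsum_ext; intros; ring.
Qed.

(** * One-sided limits and continuity *)

(** A hand-rolled filter: [P d] plays the role of a (one-sided) neighbourhood of radius [d]. *)
Definition lim_along (P : R -> R -> Prop) (h : R -> R) l :=
  forall eps, 0 < eps -> exists d, 0 < d /\ forall s, P d s -> Rabs (h s - l) < eps.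

Definition shrinks_to (P : R -> R -> Prop) t :=
  (forall d d' s, d <= d' -> P d s -> P d' s) /\ (forall d s, P d s -> Rabs (s - t) < d).

Definition right_of t d s := t <= s < t + d.
Definition left_of t d s := t - d < s < t.
Definition ball_of t d s := Rabs (s - t) < d.

Definition cont_at (f : R -> R) t := lim_along (ball_of t) f (f t).

Lemma shrinks_right t : shrinks_to (right_of t) t.
Proof. split; unfold right_of; intros. lra. rewrite Rabs_right; lra. Qed.

Lemma shrinks_left t : shrinks_to (left_of t) t.
Proof. split; unfold left_of; intros. lra. rewrite Rabs_left; lra. Qed.

Lemma shrinks_ball t : shrinks_to (ball_of t) t.
Proof. split; unfold ball_of; intros; lra. Qed.

Lemma cont_at_of_continuity_pt f t : continuity_pt f t -> cont_at f t.
Proof.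
  intros H eps He. destruct (H eps He) as [d [Hd Hf]]. exists d. split; auto. intros s Hs.
  destruct (Req_dec s t). subst. rewrite Rminus_diag, Rabs_R0; auto.
  apply (Hf s). split. split. exact I. auto. exact Hs.
Qed.

Lemma cont_at_ext f g t : (forall s, f s = g s) -> cont_at g t -> cont_at f t.
Proof.
  intros E H eps He. destruct (H eps He) as [d [Hd G]]. exists d; split; auto.
  intros s Hs. rewrite !E. auto.
Qed.

Lemma cont_at_id t : cont_at (fun s => s) t.
Proof. intros e He; exists e; split; auto. Qed.

Section LimitAlgebra.
Variables (P : R -> R -> Prop) (t : R).
Hypothesis HP : shrinks_to P t.

Lemma eventually_and (Q1 Q2 : R -> Prop) :
  (exists d, 0 < d /\ forall s, P d s -> Q1 s) -> (exists d, 0 < d /\ forall s, P d s -> Q2 s) ->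
  exists d, 0 < d /\ forall s, P d s -> Q1 s /\ Q2 s.
Proof.
  intros [d1 [H1 G1]] [d2 [H2 G2]]. destruct HP as [Hm _].
  exists (Rmin d1 d2). split. apply Rmin_pos; auto.
  intros s Hs. split; [apply G1|apply G2]; eapply Hm; try exact Hs; [apply Rmin_l|apply Rmin_r].
Qed.

Lemma lim_along_const c : lim_along P (fun _ => c) c.
Proof. intros eps He. exists 1. split. lra. intros. rewrite Rminus_diag, Rabs_R0. auto. Qed.

Lemma lim_along_cont f : cont_at f t -> lim_along P f (f t).
Proof.
  intros H eps He. destruct (H eps He) as [d [Hd Hf]]. exists d. split; auto.
  intros s Hs. apply Hf. apply (proj2 HP). auto.
Qed.

Lemma lim_along_comp g h l : lim_along P h l -> cont_at g l -> lim_along P (fun s => g (h s)) (g l).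
Proof.
  intros Hh Hg eps He. destruct (Hg eps He) as [d [Hd Hgd]].
  destruct (Hh d Hd) as [d' [Hd' Hh']]. exists d'. split; auto.
  intros s Hs. apply Hgd, Hh', Hs.
Qed.

Lemma lim_along_plus h1 h2 l1 l2 : lim_along P h1 l1 -> lim_along P h2 l2 ->
  lim_along P (fun s => h1 s + h2 s) (l1 + l2).
Proof.
  intros H1 H2 eps He. assert (He2 : 0 < eps / 2) by lra.
  destruct (eventually_and _ _ (H1 _ He2) (H2 _ He2)) as [d [Hd G]]. exists d. split; auto.
  intros s Hs. destruct (G s Hs).
  replace (h1 s + h2 s - (l1 + l2)) with ((h1 s - l1) + (h2 s - l2)) by ring.
  eapply Rle_lt_trans. apply Rabs_triang. lra.
Qed.

Lemma lim_along_opp h l : lim_along P h l -> lim_along P (fun s => - h s) (- l).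
Proof.
  intros H eps He. destruct (H eps He) as [d [Hd G]]. exists d. split; auto. intros s Hs.
  replace (- h s - - l) with (- (h s - l)) by ring. rewrite Rabs_Ropp. auto.
Qed.

Lemma lim_along_minus h1 h2 l1 l2 : lim_along P h1 l1 -> lim_along P h2 l2 ->
  lim_along P (fun s => h1 s - h2 s) (l1 - l2).
Proof. intros. apply lim_along_plus; auto. apply lim_along_opp; auto. Qed.

Lemma lim_along_mult h1 h2 l1 l2 : lim_along P h1 l1 -> lim_along P h2 l2 ->
  lim_along P (fun s => h1 s * h2 s) (l1 * l2).
Proof.
  intros H1 H2 eps He.
  set (e := Rmin 1 (eps / (Rabs l1 + Rabs l2 + 1))).
  pose proof (Rabs_pos l1); pose proof (Rabs_pos l2).
  assert (He0 : 0 < e) by (apply Rmin_pos; [lra|apply Rdiv_lt_0_compat; lra]).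
  destruct (eventually_and _ _ (H1 _ He0) (H2 _ He0)) as [d [Hd G]]. exists d. split; auto.
  intros s Hs. destruct (G s Hs) as [G1 G2].
  replace (h1 s * h2 s - l1 * l2)
    with ((h1 s - l1) * (h2 s - l2) + l1 * (h2 s - l2) + l2 * (h1 s - l1)) by ring.
  assert (e <= 1) by apply Rmin_l.
  assert (Hee : e * (Rabs l1 + Rabs l2 + 1) <= eps).
  { apply Rle_trans with (eps / (Rabs l1 + Rabs l2 + 1) * (Rabs l1 + Rabs l2 + 1)).
    apply Rmult_le_compat_r. lra. apply Rmin_r. right; field. lra. }
  pose proof (Rabs_pos (h1 s - l1)); pose proof (Rabs_pos (h2 s - l2)).
  eapply Rle_lt_trans. apply Rabs_triang. eapply Rle_lt_trans. apply Rplus_le_compat_r. apply Rabs_triang.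
  rewrite !Rabs_mult. nra.
Qed.

Lemma lim_along_fsum n (h : Fin.t n -> R -> R) (l : Fin.t n -> R) :
  (forall i, lim_along P (h i) (l i)) -> lim_along P (fun s => fsum n (fun i => h i s)) (fsum n l).
Proof.
  induction n; intros H; simpl. apply lim_along_const.
  apply (lim_along_plus (h Fin.F1) (fun s => fsum n (fun i => h (Fin.FS i) s))). auto.
  apply (IHn (fun i => h (Fin.FS i)) (fun i => l (Fin.FS i))). auto.
Qed.

Lemma lim_along_exp h l : lim_along P h l -> lim_along P (fun s => exp (h s)) (exp l).
Proof.
  intros H. apply (lim_along_comp exp h l H).
  apply cont_at_of_continuity_pt, derivable_continuous_pt, derivable_pt_exp.
Qed.

Lemma lim_along_dominated h l (b : R -> R) :
  lim_along P b 0 -> (forall s, Rabs (h s - l) <= b s) -> lim_along P h l.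
Proof.
  intros Hb H eps He. destruct (Hb eps He) as [d [Hd G]]. exists d. split; auto. intros s Hs.
  specialize (G s Hs). rewrite Rminus_0_r in G.
  eapply Rle_lt_trans; [apply H|]. eapply Rle_lt_trans; [apply Rle_abs|]. auto.
Qed.

Definition vlim_along {n} (x : R -> vec n) (L : vec n) := forall i, lim_along P (fun s => x s i) (L i).

Lemma lim_along_vnorm_sub n (x : R -> vec n) L :
  vlim_along x L -> lim_along P (fun s => vnorm (vsub (x s) L)) 0.
Proof.
  intros H. apply lim_along_dominated with (b := fun s => fsum n (fun i => Rabs (x s i - L i))).
  - rewrite <- (fsum_const0 n). apply lim_along_fsum. intros i. rewrite <- Rabs_R0.
    apply (lim_along_comp Rabs (fun s => x s i - L i) 0).
    + replace 0 with (L i - L i) by ring. apply lim_along_minus. apply H. apply lim_along_const.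
    + apply cont_at_of_continuity_pt, Rcontinuity_abs.
  - intros s. rewrite Rminus_0_r, Rabs_right by (apply Rle_ge, vnorm_ge0). apply vnorm_le_fsum_abs.
Qed.

Lemma vlim_along_lipschitz n m p (h : vec n -> vec m -> vec p) K x y L M :
  lipschitz h K -> vlim_along x L -> vlim_along y M -> vlim_along (fun s => h (x s) (y s)) (h L M).
Proof.
  intros Hh Hx Hy j.
  apply lim_along_dominated with (b := fun s => Rabs K * (vnorm (vsub (x s) L) + vnorm (vsub (y s) M))).
  - replace 0 with (Rabs K * (0 + 0)) by ring.
    apply lim_along_mult. apply lim_along_const. apply lim_along_plus; apply lim_along_vnorm_sub; auto.
  - intros s. eapply Rle_trans. apply (Rabs_coord_le_vnorm p (vsub (h (x s) (y s)) (h L M)) j).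
    eapply Rle_trans. apply Hh. apply Rmult_le_compat_r; [|apply Rle_abs].
    pose proof (vnorm_ge0 _ (vsub (x s) L)); pose proof (vnorm_ge0 _ (vsub (y s) M)); lra.
Qed.

Lemma vlim_along_scale n c (x : R -> vec n) lc L :
  lim_along P c lc -> vlim_along x L -> vlim_along (fun s => vscale (c s) (x s)) (vscale lc L).
Proof. intros Hc Hx i. apply lim_along_mult; auto. Qed.

Lemma vlim_along_sub n (x y : R -> vec n) L M :
  vlim_along x L -> vlim_along y M -> vlim_along (fun s => vsub (x s) (y s)) (vsub L M).
Proof. intros Hx Hy i. apply lim_along_minus; auto. Qed.

Lemma vlim_along_mvmul n (E : R -> mat n) (LE : mat n) x L :
  (forall i j, lim_along P (fun s => E s i j) (LE i j)) -> vlim_along x L ->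
  vlim_along (fun s => mvmul (E s) (x s)) (mvmul LE L).
Proof.
  intros HE Hx i. apply (lim_along_fsum n (fun j s => E s i j * x s j)).
  intros j. apply lim_along_mult; auto.
Qed.

(* The value at [t] is frozen at the limit [lz] of [zeta]: the integrand may jump with [zeta]. *)
Lemma vlim_along_Ftr n m p (h : vec n -> vec m -> vec p) K zeta lz (X : R -> vec n) (Y : R -> vec m) LX LY :
  lipschitz h K -> lim_along P zeta lz -> vlim_along X LX -> vlim_along Y LY ->
  vlim_along (fun s => Ftr h zeta (X s) (Y s) s) (Ftr h (fun _ => lz) LX LY t).
Proof.
  intros Hh Hz HX HY. unfold Ftr.
  apply vlim_along_scale. apply lim_along_exp, lim_along_opp; auto.
  apply (vlim_along_lipschitz _ _ _ h K); auto;
    apply vlim_along_scale; auto; apply lim_along_exp; auto.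
Qed.

End LimitAlgebra.

Lemma cont_at_plus f g t : cont_at f t -> cont_at g t -> cont_at (fun s => f s + g s) t.
Proof. apply (lim_along_plus _ t (shrinks_ball t)). Qed.

Lemma cont_at_minus f g t : cont_at f t -> cont_at g t -> cont_at (fun s => f s - g s) t.
Proof. apply (lim_along_minus _ t (shrinks_ball t)). Qed.

Lemma cont_at_mult f g t : cont_at f t -> cont_at g t -> cont_at (fun s => f s * g s) t.
Proof. apply (lim_along_mult _ t (shrinks_ball t)). Qed.

Lemma cont_at_const c t : cont_at (fun _ => c) t.
Proof. apply lim_along_const. Qed.

Lemma cont_at_exp f t : cont_at f t -> cont_at (fun s => exp (f s)) t.
Proof. apply lim_along_exp. Qed.

Lemma cont_at_fsum n (h : Fin.t n -> R -> R) t :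
  (forall i, cont_at (h i) t) -> cont_at (fun s => fsum n (fun i => h i s)) t.
Proof. apply (lim_along_fsum _ t (shrinks_ball t)). Qed.

Lemma cont_at_mexp p (E : mat p) i j t : cont_at (fun s => mexp E s i j) t.
Proof. apply cont_at_of_continuity_pt, mexp_continuous. Qed.

Lemma cont_at_mexp_sub p (E : mat p) t0 i j t : cont_at (fun s => mexp E (t0 - s) i j) t.
Proof.
  apply (lim_along_comp _ (fun x => mexp E x i j) (fun s => t0 - s) (t0 - t)).
  - apply cont_at_minus. apply cont_at_const. apply cont_at_id.
  - apply cont_at_mexp.
Qed.

Definition vcont {p} (u : R -> vec p) := forall j t, cont_at (fun s => u s j) t.

Lemma vcont_vadd p (u v : R -> vec p) : vcont u -> vcont v -> vcont (fun s => vadd (u s) (v s)).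
Proof. intros Hu Hv j t. apply cont_at_plus; auto. Qed.

Lemma cont_neg_of_vcont p (u : R -> vec p) : vcont u -> cont_neg u.
Proof.
  intros Hu t _ eps He.
  destruct (lim_along_vnorm_sub _ t (shrinks_ball t) _ u (u t) (fun j => Hu j t) eps He) as [d [Hd G]].
  exists d. split; auto. intros s _ Hs. specialize (G s Hs).
  rewrite Rminus_0_r in G. eapply Rle_lt_trans; [apply Rle_abs|]; auto.
Qed.

Definition extend_const {p} (u : R -> vec p) : R -> vec p := fun s => u (Rmin s 0).

Lemma vcont_extend_const p (u : R -> vec p) : cont_neg u -> vcont (extend_const u).
Proof.
  intros Hu j t eps He. unfold extend_const. destruct (Rle_dec t 0) as [Ht|Ht].
  - destruct (Hu t Ht eps He) as [d [Hd G]]. exists d. split; auto. intros s Hs.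
    rewrite (Rmin_left t 0 Ht). eapply Rle_lt_trans. apply (Rabs_coord_le_vnorm _ (vsub (u (Rmin s 0)) (u t)) j).
    apply G. apply Rmin_r. unfold ball_of in Hs. unfold Rmin. destruct (Rle_dec s 0). auto.
    rewrite Rminus_0_l, Rabs_Ropp, Rabs_left1 by lra. apply Rabs_def2 in Hs. lra.
  - exists t. split. lra. intros s Hs. unfold ball_of in Hs. apply Rabs_def2 in Hs.
    rewrite !Rmin_right by lra. rewrite Rminus_diag, Rabs_R0. auto.
Qed.

(** * Riemann integrals *)

Lemma ex_RInt_uniform_approx (h : R -> R) a b : a <= b ->
  (forall eps, 0 < eps -> exists g, ex_RInt g a b /\ forall t, a <= t <= b -> Rabs (h t - g t) <= eps) ->
  ex_RInt h a b.
Proof.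
  intros Hab H. apply ex_RInt_Reals_1. intros eps.
  assert (He' : 0 < eps / (2 * (b - a + 1))) by (apply Rdiv_lt_0_compat; [apply cond_pos|lra]).
  destruct (constructive_indefinite_description _ (H _ He')) as [g [Hg Hhg]].
  assert (He2 : 0 < eps / 2) by (destruct eps; simpl; lra).
  destruct (ex_RInt_Reals_0 _ _ _ Hg (mkposreal _ He2)) as [phi [psi [Hp1 Hp2]]].
  exists phi.
  (* a step function dominating [|h - phi|]: the one for [g], plus the constant [eps / (2 (b - a + 1))] *)
  set (c := mkStepFun (StepFun_P4 a b 1)).
  exists (mkStepFun (StepFun_P28 (eps / (2 * (b - a + 1))) psi c)).
  split.
  - intros t Ht. simpl. unfold fct_cte. rewrite Rmin_left, Rmax_right in Ht by lra.
    replace (h t - phi t) with ((h t - g t) + (g t - phi t)) by ring.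
    eapply Rle_trans. apply Rabs_triang. specialize (Hhg t Ht).
    specialize (Hp1 t). rewrite Rmin_left, Rmax_right in Hp1 by lra. specialize (Hp1 Ht). lra.
  - rewrite StepFun_P30. unfold c. rewrite StepFun_P18. simpl in Hp2.
    eapply Rle_lt_trans. apply Rabs_triang. rewrite Rabs_mult, (Rabs_right (eps / _)) by lra.
    rewrite Rabs_mult, Rabs_R1, (Rabs_right (b - a)) by lra.
    assert (eps / (2 * (b - a + 1)) * (1 * (b - a)) < eps / 2).
    { apply Rmult_lt_reg_r with (2 * (b - a + 1)). lra. field_simplify; try lra. }
    lra.
Qed.

Definition approx_upto (h : R -> R) eps a x :=
  exists g, ex_RInt g a x /\ forall t, a <= t <= x -> Rabs (h t - g t) <= eps.

Lemma approx_upto_left_limit h eps a x s l d : 0 < eps ->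
  (forall t, s - d < t < s -> Rabs (h t - l) < eps) ->
  a <= x <= s -> s - d < x -> approx_upto h eps a x -> approx_upto h eps a s.
Proof.
  intros He Hl Hx Hxd [g [Hg Hhg]].
  exists (fun t => if Rle_dec t x then g t else if Rlt_dec t s then l else h s). split.
  - apply ex_RInt_Chasles with x.
    + eapply ex_RInt_ext; [|exact Hg]. intros t Ht. rewrite Rmin_left, Rmax_right in Ht by lra.
      destruct (Rle_dec t x); auto. lra.
    + eapply ex_RInt_ext; [|apply (ex_RInt_const x s l)]. intros t Ht.
      rewrite Rmin_left, Rmax_right in Ht by lra.
      destruct (Rle_dec t x). lra. destruct (Rlt_dec t s). auto. lra.
  - intros t Ht. destruct (Rle_dec t x). apply Hhg; lra.
    destruct (Rlt_dec t s). left. apply Hl. lra.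
    replace t with s by lra. rewrite Rminus_diag, Rabs_R0. lra.
Qed.

Lemma approx_upto_right_cont h eps a s y d :
  (forall t, s <= t < s + d -> Rabs (h t - h s) < eps) ->
  a <= s <= y -> y < s + d -> approx_upto h eps a s -> approx_upto h eps a y.
Proof.
  intros Hr Hy Hyd [g [Hg Hhg]]. exists (fun t => if Rle_dec t s then g t else h s). split.
  - apply ex_RInt_Chasles with s.
    + eapply ex_RInt_ext; [|exact Hg]. intros t Ht. rewrite Rmin_left, Rmax_right in Ht by lra.
      destruct (Rle_dec t s); auto. lra.
    + eapply ex_RInt_ext; [|apply (ex_RInt_const s y (h s))]. intros t Ht.
      rewrite Rmin_left, Rmax_right in Ht by lra. destruct (Rle_dec t s). lra. auto.
  - intros t Ht. destruct (Rle_dec t s). apply Hhg; lra. left. apply Hr. lra.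
Qed.

(* Classical argument: the supremum of the [x] up to which [h] is [eps]-approximable is
   reached thanks to the left limit and exceeded thanks to right continuity, unless it is [b]. *)
Lemma ex_RInt_cadlag_le h a b : cadlag h -> a <= b -> ex_RInt h a b.
Proof.
  intros Hh Hab. apply ex_RInt_uniform_approx; auto. intros eps Heps.
  set (S := fun x => a <= x <= b /\ approx_upto h eps a x).
  assert (Sa : S a).
  { split. lra. exists h. split. apply ex_RInt_point. intros. rewrite Rminus_diag, Rabs_R0. lra. }
  assert (Sb : bound S) by (exists b; intros x [Hx _]; lra).
  destruct (completeness S Sb (ex_intro _ a Sa)) as [s [Hub Hlub]].
  assert (Has : a <= s) by (apply Hub; auto).
  assert (Hsb : s <= b) by (apply Hlub; intros x [Hx _]; lra).
  assert (Ss : approx_upto h eps a s).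
  { destruct (Req_dec s a) as [E|E]. { subst. apply Sa. }
    destruct (Hh s) as [_ [l Hl]]. destruct (Hl eps Heps) as [d1 [Hd1 Hl1]].
    assert (exists x, S x /\ Rmax a (s - d1) < x) as [x [[Hx Sx] Hxm]].
    { apply NNPP. intros C. assert (s <= Rmax a (s - d1)).
      { apply Hlub. intros x Sx. apply Rnot_lt_le. intros C2. apply C. exists x. auto. }
      unfold Rmax in H. destruct (Rle_dec a (s - d1)); lra. }
    assert (x <= s) by (apply Hub; split; auto).
    pose proof (Rmax_l a (s - d1)). pose proof (Rmax_r a (s - d1)).
    apply (approx_upto_left_limit h eps a x s l d1 Heps Hl1); auto; lra. }
  destruct (Req_dec s b) as [E|E]. { subst. destruct Ss as [g [Hg Hhg]]. apply ex_intro with g; auto. }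
  exfalso. destruct (Hh s) as [Hr _]. destruct (Hr eps Heps) as [d2 [Hd2 Hr2]].
  set (y := Rmin b (s + d2 / 2)).
  assert (Hy : s < y <= b /\ y <= s + d2 / 2).
  { unfold y, Rmin; destruct (Rle_dec b (s + d2/2)); lra. }
  assert (S y) by (split; [lra|apply (approx_upto_right_cont h eps a s y d2 Hr2); auto; lra]).
  pose proof (Hub y H). lra.
Qed.

Lemma ex_RInt_cadlag h a b : cadlag h -> ex_RInt h a b.
Proof.
  intros Hh. destruct (Rle_dec a b). apply ex_RInt_cadlag_le; auto.
  apply ex_RInt_swap. apply ex_RInt_cadlag_le; auto. lra.
Qed.

Lemma has_RInt_of_is (f : R -> R) a b I : is_RInt f a b I -> has_RInt f a b I.
Proof.
  intros H. assert (E : ex_RInt f a b) by (exists I; auto).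
  exists (ex_RInt_Reals_0 _ _ _ E). rewrite <- RInt_Reals. apply is_RInt_unique; auto.
Qed.

Lemma is_RInt_of_has (f : R -> R) a b I : has_RInt f a b I -> is_RInt f a b I.
Proof.
  intros [pr Hpr]. pose proof (ex_RInt_Reals_1 _ _ _ pr) as E.
  rewrite <- Hpr, <- RInt_Reals. apply (RInt_correct (V:=R_CompleteNormedModule)); auto.
Qed.

Lemma Defs_RInt_eq (f : R -> R) a b : ex_RInt f a b -> Defs.RInt f a b = RInt f a b.
Proof.
  intros E. unfold Defs.RInt.
  assert (H : has_RInt f a b (RInt f a b))
    by (apply has_RInt_of_is, (RInt_correct (V:=R_CompleteNormedModule)), E).
  pose proof (epsilon_spec (inhabits 0) (has_RInt f a b) (ex_intro _ _ H)) as H2.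
  apply is_RInt_of_has, (is_RInt_unique (V:=R_CompleteNormedModule)) in H2. rewrite <- H2. reflexivity.
Qed.

Lemma RInt_Chasles_R (f : R -> R) a b c : ex_RInt f a b -> ex_RInt f b c ->
  @eq R (RInt f a c) (RInt f a b + RInt f b c).
Proof. intros. rewrite <- (RInt_Chasles f a b c); auto. Qed.

Lemma is_RInt_R0 x y : is_RInt (fun _ => 0) x y 0.
Proof.
  pose proof (is_RInt_const (V:=R_NormedModule) x y 0) as H0.
  replace (scal (y - x) (0:R_NormedModule)) with (0:R_NormedModule) in H0
    by (unfold scal; simpl; unfold mult; simpl; ring).
  exact H0.
Qed.

Lemma is_RInt_fsum_lin n (h : Fin.t n -> R -> R) (c I : Fin.t n -> R) a b :
  (forall j, is_RInt (h j) a b (I j)) ->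
  is_RInt (fun s => fsum n (fun j => c j * h j s)) a b (fsum n (fun j => c j * I j)).
Proof.
  induction n; intros H; simpl.
  - apply is_RInt_R0.
  - apply (is_RInt_plus (V:=R_NormedModule) (fun s => c Fin.F1 * h Fin.F1 s)
                        (fun s => fsum n (fun j => c (Fin.FS j) * h (Fin.FS j) s))).
    + apply (is_RInt_scal (V:=R_NormedModule) (h Fin.F1)). auto.
    + apply (IHn (fun j => h (Fin.FS j)) (fun j => c (Fin.FS j)) (fun j => I (Fin.FS j))). auto.
Qed.

Lemma cont_at_RInt (G : R -> R) t : (forall T, ex_RInt G 0 T) -> cont_at (fun T => RInt G 0 T) t.
Proof.
  intros H.
  assert (HA : forall x y, ex_RInt G x y) by (intros x y; apply ex_RInt_Chasles with 0; [apply ex_RInt_swap|]; auto).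
  destruct (ex_RInt_ub G (t - 1) (t + 1) (HA _ _)) as [M HM].
  intros eps He. assert (HM0 : 0 < Rabs M + 1) by (pose proof (Rabs_pos M); lra).
  exists (Rmin 1 (eps / (Rabs M + 1))). split. apply Rmin_pos. lra. apply Rdiv_lt_0_compat; lra.
  intros s Hs. unfold ball_of in Hs.
  pose proof (Rmin_l 1 (eps / (Rabs M + 1))). pose proof (Rmin_r 1 (eps / (Rabs M + 1))).
  rewrite (RInt_Chasles_R G 0 t s) by auto.
  unfold Rminus. rewrite Rplus_comm, <- Rplus_assoc, Rplus_opp_l, Rplus_0_l.
  assert (Hb : forall x, Rmin t s <= x <= Rmax t s -> Rabs (G x) <= Rabs M).
  { intros x Hx. eapply Rle_trans; [|apply Rle_abs]. apply (HM x).
    rewrite Rmin_left, Rmax_right by lra. apply Rabs_def2 in Hs.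
    destruct (Rle_dec t s); [rewrite Rmin_left, Rmax_right in Hx by lra
                            |rewrite Rmin_right, Rmax_left in Hx by lra]; lra. }
  assert (Habs : Rabs (RInt G t s) <= Rabs (s - t) * Rabs M).
  { destruct (Rle_dec t s).
    - rewrite (Rabs_right (s - t)) by lra. apply abs_RInt_le_const; auto.
      intros x Hx; apply Hb. rewrite Rmin_left, Rmax_right; lra.
    - rewrite <- (opp_RInt_swap G s t) by auto. unfold opp; simpl.
      rewrite Rabs_Ropp, (Rabs_left (s - t)) by lra. replace (- (s - t)) with (t - s) by ring.
      apply abs_RInt_le_const; auto. lra. intros; apply Hb. rewrite Rmin_right, Rmax_left; lra. }
  eapply Rle_lt_trans. exact Habs.
  apply Rle_lt_trans with (eps / (Rabs M + 1) * Rabs M). apply Rmult_le_compat_r. apply Rabs_pos. lra.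
  apply Rlt_le_trans with (eps / (Rabs M + 1) * (Rabs M + 1)).
  apply Rmult_lt_compat_l. apply Rdiv_lt_0_compat; lra. lra. right; field. lra.
Qed.

Lemma vnorm_RInt_le n (gv : R -> vec n) (I : vec n) (h : R -> R) a b : a <= b ->
  (forall i, is_RInt (fun s => gv s i) a b (I i)) -> ex_RInt h a b ->
  (forall s, a < s < b -> vnorm (gv s) <= h s) -> vnorm I <= RInt h a b.
Proof.
  intros Hab HI Hh Hb.
  destruct (Req_dec (vnorm I) 0) as [E|E].
  { rewrite E. apply RInt_ge_0; auto. intros. eapply Rle_trans; [apply vnorm_ge0|apply Hb]; auto. }
  pose proof (vnorm_ge0 n I).
  (* |I|^2 = int <I, gv s> ds <= |I| int h *)
  assert (Hsq : vnorm I * vnorm I <= vnorm I * RInt h a b).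
  { rewrite vnorm_sq, (fsum_ext _ _ (fun i => I i * I i)) by (intros; ring).
    pose proof (is_RInt_fsum_lin n (fun j s => gv s j) I I a b HI) as H1.
    rewrite <- (is_RInt_unique (V:=R_CompleteNormedModule) _ _ _ _ H1).
    rewrite <- (RInt_scal (V:=R_CompleteNormedModule)) by auto.
    apply RInt_le; auto. eexists; exact H1.
    apply (ex_RInt_scal (V:=R_CompleteNormedModule)); auto.
    intros s Hs. unfold scal; simpl; unfold mult; simpl. eapply Rle_trans. apply (cauchy_schwarz n I (gv s)).
    apply Rmult_le_compat_l; auto. }
  apply Rmult_le_reg_l with (vnorm I). lra. auto.
Qed.

Lemma is_RInt_exp_lin k x y : k <> 0 ->
  is_RInt (fun s => exp (k * s)) x y ((exp (k * y) - exp (k * x)) / k).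
Proof.
  intros Hk. replace ((exp (k * y) - exp (k * x)) / k) with (minus (exp (k * y) / k) (exp (k * x) / k))
    by (unfold minus, plus, opp; simpl; field; auto).
  apply (is_RInt_derive (V:=R_CompleteNormedModule) (fun s => exp (k * s) / k)).
  - intros s _. auto_derive. auto. field. auto.
  - intros s _. apply (ex_derive_continuous (fun s => exp (k * s))). auto_derive. auto.
Qed.

Lemma RInt_exp_lin_le C k x y : 0 <= C -> 0 < k -> x <= y ->
  RInt (fun s => C * exp (k * s)) x y <= C * exp (k * y) / k.
Proof.
  intros HC Hk Hxy.
  assert (H : is_RInt (fun s => C * exp (k * s)) x y (C * ((exp (k * y) - exp (k * x)) / k)))
    by exact (is_RInt_scal (V:=R_NormedModule) _ _ _ C _ (is_RInt_exp_lin k x y ltac:(lra))).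
  rewrite (is_RInt_unique (V:=R_CompleteNormedModule) _ _ _ _ H). pose proof (exp_pos (k * x)).
  unfold Rdiv. rewrite Rmult_assoc. apply Rmult_le_compat_l; auto.
  apply Rmult_le_compat_r. left; apply Rinv_0_lt_compat; lra. lra.
Qed.

Lemma ex_RInt_exp_lin C k x y : k <> 0 -> ex_RInt (fun s => C * exp (k * s)) x y.
Proof.
  intros Hk. eexists. apply (is_RInt_scal (V:=R_NormedModule) (fun s => exp (k * s))).
  apply is_RInt_exp_lin; auto.
Qed.

Lemma RInt_exp_neg_lin_le C k x y : 0 <= C -> k < 0 -> x <= y ->
  RInt (fun s => C * exp (k * s)) x y <= C * exp (k * x) / - k.
Proof.
  intros HC Hk Hxy.
  assert (H : is_RInt (fun s => C * exp (k * s)) x y (C * ((exp (k * y) - exp (k * x)) / k)))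
    by exact (is_RInt_scal (V:=R_NormedModule) _ _ _ C _ (is_RInt_exp_lin k x y ltac:(lra))).
  rewrite (is_RInt_unique (V:=R_CompleteNormedModule) _ _ _ _ H). pose proof (exp_pos (k * y)).
  replace (C * ((exp (k * y) - exp (k * x)) / k)) with (C * ((exp (k * x) - exp (k * y)) / - k))
    by (field; lra).
  unfold Rdiv. rewrite Rmult_assoc. apply Rmult_le_compat_l; auto.
  apply Rmult_le_compat_r. left; apply Rinv_0_lt_compat; lra. lra.
Qed.

Lemma is_RInt_minus_swap (F1 F2 : R -> R) x y J1 J2 : is_RInt F1 y x J1 -> is_RInt F2 y x J2 ->
  is_RInt (fun s => F1 s - F2 s) x y (J2 - J1).
Proof.
  intros H1 H2. pose proof (is_RInt_minus (V:=R_NormedModule) _ _ _ _ _ _ H1 H2) as H.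
  apply (is_RInt_swap (V:=R_NormedModule)) in H. replace (J2 - J1) with (opp (minus J1 J2)).
  eapply is_RInt_ext; [|exact H]. intros; reflexivity.
  unfold opp, minus, plus; simpl. unfold opp; simpl. ring.
Qed.

Lemma vhas_RInt_ext p (G1 G2 : R -> vec p) x y I :
  (forall s, Rmin x y <= s <= Rmax x y -> G1 s = G2 s) -> vhas_RInt G1 x y I -> vhas_RInt G2 x y I.
Proof.
  intros E H i. apply has_RInt_of_is. eapply is_RInt_ext; [|apply is_RInt_of_has, (H i)].
  intros s Hs. cbv beta. rewrite E; auto. lra.
Qed.

Lemma has_improper_lower_ext (F1 F2 : R -> R) t l :
  (forall s, s <= t -> F1 s = F2 s) -> has_improper_lower F1 t l -> has_improper_lower F2 t l.
Proof.
  intros E [Hi Hl].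
  assert (Hex : forall T, T <= t -> ex_RInt F1 T t /\ ex_RInt F2 T t).
  { intros T HT. destruct (Hi T HT) as [pr]. pose proof (ex_RInt_Reals_1 _ _ _ pr) as H1.
    split; auto. eapply ex_RInt_ext; [|exact H1]. intros s Hs.
    rewrite Rmin_left, Rmax_right in Hs by lra. apply E; lra. }
  split.
  - intros T HT. constructor. apply ex_RInt_Reals_0, Hex, HT.
  - intros eps He. destruct (Hl eps He) as [M HM]. exists (Rmin M t). intros T HT.
    pose proof (Rmin_l M t). pose proof (Rmin_r M t). destruct (Hex T ltac:(lra)) as [H1 H2].
    rewrite Defs_RInt_eq by auto. rewrite <- (RInt_ext F1).
    + rewrite <- Defs_RInt_eq by auto. apply HM. lra.
    + intros s Hs. rewrite Rmin_left, Rmax_right in Hs by lra. apply E; lra.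
Qed.

(** * Limits of sequences and improper integrals *)

Lemma exp_le x y : x <= y -> exp x <= exp y.
Proof. intros H. destruct (Rle_lt_or_eq_dec _ _ H). left; apply exp_increasing; auto. subst; lra. Qed.

Lemma exp_lin_small c k eps : 0 <= c -> 0 < k -> 0 < eps ->
  exists M, M <= 0 /\ forall T, T <= M -> c * exp (k * T) < eps.
Proof.
  intros Hc Hk He. set (e := eps / (2 * (c + 1))).
  assert (He' : 0 < e) by (unfold e; apply Rdiv_lt_0_compat; lra).
  exists (Rmin 0 (ln e / k)). split. apply Rmin_l. intros T HT.
  assert (H1 : k * T <= ln e).
  { pose proof (Rmin_r 0 (ln e / k)). apply Rmult_le_reg_r with (/ k). apply Rinv_0_lt_compat; auto.
    rewrite (Rmult_comm k), Rmult_assoc, Rinv_r by lra. rewrite Rmult_1_r. unfold Rdiv in H. lra. }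
  apply exp_le in H1. rewrite exp_ln in H1 by auto.
  apply Rle_lt_trans with ((c + 1) * e). apply Rmult_le_compat; try lra. left; apply exp_pos.
  unfold e. replace ((c + 1) * (eps / (2 * (c + 1)))) with (eps / 2) by (field; lra). lra.
Qed.

Lemma pow_lt1_small rho c eps : 0 <= rho < 1 -> 0 <= c -> 0 < eps -> exists N, c * rho ^ N < eps.
Proof.
  intros Hr Hc He. assert (Hx : 0 < eps / (c + 1)) by (apply Rdiv_lt_0_compat; lra).
  destruct (pow_lt_1_zero rho ltac:(rewrite Rabs_right; lra) _ Hx) as [N HN].
  specialize (HN N (Nat.le_refl N)). rewrite Rabs_right in HN by (apply Rle_ge, pow_le; lra).
  exists N. pose proof (pow_le rho N (proj1 Hr)).
  apply Rle_lt_trans with ((c + 1) * rho ^ N). nra.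
  apply Rlt_le_trans with ((c + 1) * (eps / (c + 1))). apply Rmult_lt_compat_l; lra.
  right; field; lra.
Qed.

Lemma pow_antimono_le1 rho p q : 0 <= rho <= 1 -> (p <= q)%nat -> rho ^ q <= rho ^ p.
Proof.
  intros Hr Hpq. replace q with (p + (q - p))%nat by lia. rewrite pow_add.
  pose proof (pow_le rho p (proj1 Hr)). pose proof (pow_incr rho 1 (q - p) Hr).
  rewrite pow1 in H0. nra.
Qed.

Lemma le_geometric_eq0 x C rho : 0 <= x -> 0 <= C -> 0 <= rho < 1 ->
  (forall p, x <= C * rho ^ p) -> x = 0.
Proof.
  intros Hx HC Hr H. destruct (Req_dec x 0); auto. exfalso.
  destruct (pow_lt1_small rho C x Hr HC ltac:(lra)) as [N HN]. specialize (H N). lra.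
Qed.

Lemma is_lim_seq_dist_le (u : nat -> R) (l : R) c B : is_lim_seq u l ->
  (exists N, forall k, (N <= k)%nat -> Rabs (u k - c) <= B) -> Rabs (l - c) <= B.
Proof.
  intros Hl [N HN]. apply is_lim_seq_spec in Hl. apply Rle_plus_epsilon. intros eps He.
  destruct (Hl (mkposreal eps He)) as [N2 HN2].
  specialize (HN2 (max N N2) (Nat.le_max_r _ _)). specialize (HN (max N N2) (Nat.le_max_l _ _)).
  simpl in HN2. replace (l - c) with ((u (max N N2) - c) - (u (max N N2) - l)) by ring.
  eapply Rle_trans. apply Rabs_triang. rewrite Rabs_Ropp. lra.
Qed.

Lemma geometric_cauchy_limit (x : nat -> R) c rho : 0 <= rho < 1 -> 0 <= c ->
  (forall k, Rabs (x (S k) - x k) <= rho ^ k * c) ->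
  forall p, Rabs (real (Lim_seq x) - x p) <= rho ^ p * c / (1 - rho).
Proof.
  intros Hr Hc H.
  assert (Hd : forall p q, (p <= q)%nat -> Rabs (x q - x p) <= rho ^ p * c / (1 - rho)).
  { assert (Hd : forall p d, Rabs (x (p + d)%nat - x p) <= (rho ^ p - rho ^ (p + d)) / (1 - rho) * c).
    { intros p d. induction d.
      - rewrite Nat.add_0_r, !Rminus_diag, Rabs_R0. unfold Rdiv. lra.
      - replace (p + S d)%nat with (S (p + d)) by lia.
        replace (x (S (p + d)) - x p) with ((x (S (p + d)) - x (p + d)%nat) + (x (p + d)%nat - x p)) by ring.
        eapply Rle_trans. apply Rabs_triang. eapply Rle_trans. apply Rplus_le_compat. apply H. apply IHd.
        right. simpl pow. field. lra. }
    intros p q Hpq. replace q with (p + (q - p))%nat by lia. eapply Rle_trans. apply Hd.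
    pose proof (pow_le rho (p + (q - p)) (proj1 Hr)).
    replace ((rho ^ p - rho ^ (p + (q - p))) / (1 - rho) * c)
      with ((rho ^ p - rho ^ (p + (q - p))) * c / (1 - rho)) by (field; lra).
    unfold Rdiv. apply Rmult_le_compat_r. left; apply Rinv_0_lt_compat; lra. nra. }
  assert (Hcauchy : ex_lim_seq_cauchy x).
  { intros eps. destruct (pow_lt1_small rho (c / (1 - rho)) eps Hr) as [N HN].
    { apply Rdiv_le_0_compat; lra. } { apply cond_pos. }
    exists N.
    assert (G : forall p q, (N <= p)%nat -> (p <= q)%nat -> Rabs (x q - x p) < eps).
    { intros p q Hp Hpq. eapply Rle_lt_trans. apply Hd; auto.
      eapply Rle_lt_trans; [|exact HN]. unfold Rdiv.
      replace (rho ^ p * c * / (1 - rho)) with (c * / (1 - rho) * rho ^ p) by ring.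
      apply Rmult_le_compat_l. apply Rmult_le_pos; [lra|left; apply Rinv_0_lt_compat; lra].
      apply pow_antimono_le1; auto; lra. }
    intros p q Hp Hq. destruct (Nat.le_ge_cases p q) as [L|L].
    + rewrite Rabs_minus_sym. apply G; auto.
    + apply G; auto. }
  apply ex_lim_seq_cauchy_corr in Hcauchy. pose proof (Lim_seq_correct' x Hcauchy) as HL.
  intros p. apply (is_lim_seq_dist_le x _ (x p)). exact HL.
  exists p. intros k Hk. apply Hd; auto.
Qed.

Definition RInt_neg_infty (h : R -> R) := real (Lim_seq (fun N => RInt h (- INR N) 0)).

Section ImproperIntegral.
Variables (h : R -> R) (C k : R).
Hypotheses (HC : 0 <= C) (Hk : 0 < k) (Hint : forall x y, ex_RInt h x y)
  (Hdecay : forall s, s <= 0 -> Rabs (h s) <= C * exp (k * s)).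

Lemma Rabs_RInt_exp_tail T1 T2 : T1 <= T2 -> T2 <= 0 -> Rabs (RInt h T1 T2) <= C * exp (k * T2) / k.
Proof.
  intros H12 H2. eapply Rle_trans. apply abs_RInt_le; auto.
  eapply Rle_trans; [|apply (RInt_exp_lin_le C k T1 T2); auto].
  apply RInt_le; auto. apply (ex_RInt_norm h); auto. apply ex_RInt_exp_lin; lra.
  intros x Hx; apply Hdecay; lra.
Qed.

Lemma RInt_neg_infty_tail T : T <= 0 -> Rabs (RInt h T 0 - RInt_neg_infty h) <= C * exp (k * T) / k.
Proof.
  unfold RInt_neg_infty. set (a := fun N : nat => RInt h (- INR N) 0).
  assert (Ha : forall p q : nat, (p <= q)%nat -> Rabs (a p - a q) <= C * exp (k * (- INR p)) / k).
  { intros p q Hpq. unfold a. pose proof (le_INR _ _ Hpq). pose proof (pos_INR p).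
    rewrite (RInt_Chasles_R h (- INR q) (- INR p) 0) by auto.
    replace (RInt h (- INR p) 0 - (RInt h (- INR q) (- INR p) + RInt h (- INR p) 0))
      with (- RInt h (- INR q) (- INR p)) by lra.
    rewrite Rabs_Ropp. apply Rabs_RInt_exp_tail; lra. }
  assert (Hc : ex_lim_seq_cauchy a).
  { intros eps. destruct (exp_lin_small (C / k) k eps) as [M [HM0 HM]].
    apply Rdiv_le_0_compat; lra. auto. apply cond_pos.
    destruct (INR_unbounded (- M)) as [N HN]. exists N.
    assert (Hgen : forall p q : nat, (N <= p)%nat -> (p <= q)%nat -> Rabs (a p - a q) < eps).
    { intros p q Hp Hpq. eapply Rle_lt_trans. apply Ha; auto.
      replace (C * exp (k * - INR p) / k) with (C / k * exp (k * - INR p)) by (unfold Rdiv; ring).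
      apply HM. pose proof (le_INR _ _ Hp). lra. }
    intros p q Hp Hq. destruct (Nat.le_ge_cases p q). apply Hgen; auto.
    rewrite Rabs_minus_sym. apply Hgen; auto. }
  apply ex_lim_seq_cauchy_corr in Hc. pose proof (Lim_seq_correct' a Hc) as HL.
  intros HT. rewrite Rabs_minus_sym.
  apply (is_lim_seq_dist_le a _ (RInt h T 0)). exact HL.
  destruct (INR_unbounded (- T)) as [N HN]. exists N. intros p Hp. unfold a.
  pose proof (le_INR _ _ Hp).
  rewrite (RInt_Chasles_R h (- INR p) T 0) by auto.
  replace (RInt h (- INR p) T + RInt h T 0 - RInt h T 0) with (RInt h (- INR p) T) by lra.
  apply Rabs_RInt_exp_tail; lra.
Qed.

End ImproperIntegral.

Lemma fin_eventually p (Q : Fin.t p -> R -> Prop) :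
  (forall i, exists M, forall T, T <= M -> Q i T) -> exists M, forall i T, T <= M -> Q i T.
Proof.
  induction p; intros H.
  - exists 0. intros i. inversion i.
  - destruct (IHp (fun i => Q (Fin.FS i)) (fun i => H (Fin.FS i))) as [M1 H1].
    destruct (H Fin.F1) as [M2 H2]. exists (Rmin M1 M2). intros i. pattern i. apply Fin.caseS'.
    + intros T HT. apply H2. pose proof (Rmin_r M1 M2). lra.
    + intros q T HT. apply (H1 q). pose proof (Rmin_l M1 M2). lra.
Qed.

Lemma vnorm_improper_le p (F1 F2 : Fin.t p -> R -> R) t (l1 l2 : vec p) c :
  (forall i, has_improper_lower (F1 i) t (l1 i)) -> (forall i, has_improper_lower (F2 i) t (l2 i)) ->
  (forall T, T <= t -> vnorm (fun i => Defs.RInt (F1 i) T t - Defs.RInt (F2 i) T t) <= c) ->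
  vnorm (vsub l1 l2) <= c.
Proof.
  intros H1 H2 Hc. apply Rle_plus_epsilon. intros eps He.
  set (e := eps / (2 * (INR p + 1))). pose proof (pos_INR p).
  assert (He0 : 0 < e) by (unfold e; apply Rdiv_lt_0_compat; lra).
  destruct (fin_eventually p (fun i T => Rabs (Defs.RInt (F1 i) T t - l1 i) < e /\
                                        Rabs (Defs.RInt (F2 i) T t - l2 i) < e)) as [M HM].
  { intros i. destruct (proj2 (H1 i) e He0) as [M1 G1]. destruct (proj2 (H2 i) e He0) as [M2 G2].
    exists (Rmin M1 M2). intros T HT. pose proof (Rmin_l M1 M2). pose proof (Rmin_r M1 M2).
    split; [apply G1|apply G2]; lra. }
  set (T := Rmin M t). pose proof (Rmin_l M t). pose proof (Rmin_r M t).
  eapply Rle_trans. apply (vnorm_le_sub _ _ (fun i => Defs.RInt (F1 i) T t - Defs.RInt (F2 i) T t)).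
  apply Rplus_le_compat. apply Hc; auto.
  eapply Rle_trans. apply vnorm_le_dim_mul with (c := 2 * e).
  { intros i. destruct (HM i T ltac:(auto)) as [G1 G2]. unfold vsub.
    replace (l1 i - l2 i - (Defs.RInt (F1 i) T t - Defs.RInt (F2 i) T t))
      with (- (Defs.RInt (F1 i) T t - l1 i) + (Defs.RInt (F2 i) T t - l2 i)) by ring.
    eapply Rle_trans. apply Rabs_triang. rewrite Rabs_Ropp. lra. }
  unfold e. apply Rle_trans with (eps * (INR p / (INR p + 1))). right; field; lra.
  rewrite <- (Rmult_1_r eps) at 2. apply Rmult_le_compat_l. lra.
  apply Rmult_le_reg_r with (INR p + 1). lra.
  unfold Rdiv. rewrite Rmult_assoc, Rinv_l by lra. lra.
Qed.

(** * The transformed nonlinearities *)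

Lemma Ftr_lipschitz p q r (h : vec p -> vec q -> vec r) Kh z x1 y1 x2 y2 s : lipschitz h Kh ->
  vnorm (vsub (Ftr h z x1 y1 s) (Ftr h z x2 y2 s)) <= Kh * (vnorm (vsub x1 x2) + vnorm (vsub y1 y2)).
Proof.
  intros Hh. unfold Ftr. rewrite vscale_vsub, vnorm_scale, Rabs_right by (left; apply exp_pos).
  eapply Rle_trans. apply Rmult_le_compat_l. left; apply exp_pos. apply Hh.
  rewrite !vscale_vsub, !vnorm_scale, Rabs_right by (left; apply exp_pos).
  rewrite exp_Ropp. right. field. apply Rgt_not_eq, exp_pos.
Qed.

Lemma DeltaF_lipschitz p q r (h : vec p -> vec q -> vec r) Kh z xh yh u1 v1 u2 v2 s : lipschitz h Kh ->
  vnorm (vsub (DeltaF h z xh yh u1 v1 s) (DeltaF h z xh yh u2 v2 s))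
    <= Kh * (vnorm (vsub u1 u2) + vnorm (vsub v1 v2)).
Proof.
  intros Hh. unfold DeltaF.
  rewrite (vnorm_ext _ _ (vsub (Ftr h z (vadd u1 (xh s)) (vadd v1 (yh s)) s)
                               (Ftr h z (vadd u2 (xh s)) (vadd v2 (yh s)) s))) by (intros; unfold vsub; ring).
  eapply Rle_trans. apply Ftr_lipschitz; eauto.
  rewrite (vnorm_ext _ (vsub (vadd u1 _) _) (vsub u1 u2)) by (intros; unfold vsub, vadd; ring).
  rewrite (vnorm_ext _ (vsub (vadd v1 _) _) (vsub v1 v2)) by (intros; unfold vsub, vadd; ring). lra.
Qed.

Lemma DeltaF_vzero p q r (h : vec p -> vec q -> vec r) z xh yh s :
  DeltaF h z xh yh vzero vzero s = vzero.
Proof.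
  apply functional_extensionality. intros i. unfold DeltaF, vsub, vzero.
  replace (vadd (fun _ : Fin.t p => 0) (xh s)) with (xh s)
    by (apply functional_extensionality; intros; unfold vadd; ring).
  replace (vadd (fun _ : Fin.t q => 0) (yh s)) with (yh s)
    by (apply functional_extensionality; intros; unfold vadd; ring).
  ring.
Qed.

Lemma cadlag_scaled_Ftr_diff zeta p q r (h : vec p -> vec q -> vec r) Kh (M : R -> mat r) (c : R -> R)
  (X1 X2 : R -> vec p) (Y1 Y2 : R -> vec q) i :
  cadlag zeta -> lipschitz h Kh -> (forall j k t, cont_at (fun s => M s j k) t) -> (forall t, cont_at c t) ->
  vcont X1 -> vcont X2 -> vcont Y1 -> vcont Y2 ->
  cadlag (fun s => vscale (c s) (mvmul (M s) (vsub (Ftr h zeta (X1 s) (Y1 s) s) (Ftr h zeta (X2 s) (Y2 s) s))) i).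
Proof.
  intros Hz Hh HM Hc HX1 HX2 HY1 HY2.
  assert (G : forall P t lz, shrinks_to P t -> lim_along P zeta lz ->
    lim_along P (fun s => vscale (c s) (mvmul (M s) (vsub (Ftr h zeta (X1 s) (Y1 s) s) (Ftr h zeta (X2 s) (Y2 s) s))) i)
      (vscale (c t) (mvmul (M t) (vsub (Ftr h (fun _ => lz) (X1 t) (Y1 t) t) (Ftr h (fun _ => lz) (X2 t) (Y2 t) t))) i)).
  { intros P t lz HP Hl.
    apply (vlim_along_scale P t HP). apply (lim_along_cont P t HP); auto.
    apply (vlim_along_mvmul P t HP). intros j k. apply (lim_along_cont P t HP); auto.
    apply (vlim_along_sub P t HP);
      apply (vlim_along_Ftr P t HP _ _ _ h Kh); auto; intros j; apply (lim_along_cont P t HP); auto. }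
  intros t. destruct (Hz t) as [HR [l HL]]. split.
  - apply (G (right_of t) t (zeta t) (shrinks_right t) HR).
  - eexists. apply (G (left_of t) t l (shrinks_left t) HL).
Qed.

Lemma vcont_of_RInt_eq p (x : R -> vec p) (x0 : vec p) (G : R -> vec p) :
  (forall T, vhas_RInt G 0 T (vsub (x T) x0)) -> vcont x.
Proof.
  intros H i t. assert (HI : forall T, is_RInt (fun s => G s i) 0 T (x T i - x0 i))
    by (intros T; apply is_RInt_of_has, (H T i)).
  apply cont_at_ext with (g := fun T => x0 i + RInt (fun s => G s i) 0 T).
  { intros s. rewrite (is_RInt_unique (V:=R_CompleteNormedModule) _ _ _ _ (HI s)). simpl. ring. }
  apply cont_at_plus. apply cont_at_const. apply cont_at_RInt. intros T. eexists; apply HI.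
Qed.

(** * The Lyapunov-Perron operator on [C^-_eta] *)

Section LyapunovPerron.
Variables (n m : nat) (A : mat n) (B : mat m) (a b K : R)
  (f : vec n -> vec m -> vec n) (g : vec n -> vec m -> vec m) (zeta : R -> R).
Hypothesis Hcadlag : cadlag zeta.
Hypothesis HA : forall t x, t <= 0 -> vnorm (mvmul (mexp A t) x) <= exp (a * t) * vnorm x.
Hypothesis HB : forall t y, 0 <= t -> vnorm (mvmul (mexp B t) y) <= exp (b * t) * vnorm y.
Hypothesis Hflip : lipschitz f K.
Hypothesis Hglip : lipschitz g K.
Variables (x0 : vec n) (y0 : vec m) (xh : R -> vec n) (yh : R -> vec m).
Hypothesis Horbit : RDE_solution A B f g zeta x0 y0 xh yh.
Variable eta : R.
Hypothesis Hbeta : b < eta < a.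
Hypothesis HK : 0 <= K.
Hypothesis Hrho : K / (a - eta) + K / (eta - b) < 1.
Variable u0 : vec n.

Definition Z t := Defs.RInt zeta 0 t.

Lemma ex_RInt_zeta x y : ex_RInt zeta x y.
Proof. apply ex_RInt_cadlag, Hcadlag. Qed.

Lemma RInt_zeta_Z s t : Defs.RInt zeta s t = Z t - Z s.
Proof.
  unfold Z. rewrite !Defs_RInt_eq by apply ex_RInt_zeta.
  rewrite (RInt_Chasles_R zeta 0 s t) by apply ex_RInt_zeta. lra.
Qed.

Lemma cont_at_Z t : cont_at Z t.
Proof.
  apply cont_at_ext with (g := fun T => RInt zeta 0 T).
  intros; unfold Z; apply Defs_RInt_eq, ex_RInt_zeta.
  apply cont_at_RInt. intros; apply ex_RInt_zeta.
Qed.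

Lemma vcont_xh : vcont xh.
Proof. eapply vcont_of_RInt_eq. intros T. apply (Horbit T). Qed.

Lemma vcont_yh : vcont yh.
Proof. eapply vcont_of_RInt_eq. intros T. apply (Horbit T). Qed.

Definition kernel {p} (E : mat p) (D : R -> vec p) t s :=
  vscale (exp (Defs.RInt zeta s t)) (mvmul (mexp E (t - s)) (D s)).

Definition DF (u : R -> vec n) (v : R -> vec m) s := DeltaF f zeta xh yh (u s) (v s) s.
Definition DG (u : R -> vec n) (v : R -> vec m) s := DeltaF g zeta xh yh (u s) (v s) s.

Definition hom_part t := vscale (exp (Defs.RInt zeta 0 t)) (mvmul (mexp A t) u0).

Definition lp_image (u : R -> vec n) (v : R -> vec m) (u' : R -> vec n) (v' : R -> vec m) :=
  forall t, t <= 0 ->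
    (exists I : vec n, vhas_RInt (kernel A (DF u v) t) 0 t I /\
        u' t = vadd (hom_part t) I) /\
    (forall i, has_improper_lower (fun s => kernel B (DG u v) t s i) t (v' t i)).

Definition weight t := cminus_weight zeta eta t.

Lemma weight_pos t : 0 < weight t.
Proof. apply exp_pos. Qed.

Lemma weight_mul_exp_Z t : weight t * exp (Z t) = exp (- eta * t).
Proof. unfold weight, cminus_weight, Z. rewrite <- exp_plus. f_equal. ring. Qed.

Lemma le_div_weight x s D : weight s * x <= D -> x <= D * exp (eta * s + Z s).
Proof.
  intros H. assert (E : weight s * exp (eta * s + Z s) = 1).
  { rewrite exp_plus, <- Rmult_assoc, (Rmult_comm (weight s)), Rmult_assoc, weight_mul_exp_Z,
      <- exp_plus, <- exp_0. f_equal. ring. }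
  pose proof (exp_pos (eta * s + Z s)).
  replace x with (weight s * x * exp (eta * s + Z s))
    by (rewrite Rmult_comm, <- Rmult_assoc, (Rmult_comm _ (weight s)), E; ring).
  apply Rmult_le_compat_r; lra.
Qed.

Definition wdist (u1 : R -> vec n) (v1 : R -> vec m) u2 v2 D :=
  forall s, s <= 0 -> weight s * (vnorm (vsub (u1 s) (u2 s)) + vnorm (vsub (v1 s) (v2 s))) <= D.

Lemma wdist_ge0 u1 v1 u2 v2 D : wdist u1 v1 u2 v2 D -> 0 <= D.
Proof.
  intros H. specialize (H 0 (Rle_refl 0)). pose proof (weight_pos 0).
  pose proof (vnorm_ge0 _ (vsub (u1 0) (u2 0))). pose proof (vnorm_ge0 _ (vsub (v1 0) (v2 0))). nra.
Qed.

Lemma kernel_A_diff_le u1 v1 u2 v2 D t s : s <= 0 -> t <= s -> wdist u1 v1 u2 v2 D ->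
  vnorm (vsub (kernel A (DF u1 v1) t s) (kernel A (DF u2 v2) t s))
    <= K * D * exp (Z t) * exp (a * t) * exp ((eta - a) * s).
Proof.
  intros Hs Hts HD. unfold kernel, DF. rewrite vscale_vsub, mvmul_vsub, vnorm_scale, Rabs_right by (left; apply exp_pos).
  eapply Rle_trans. apply Rmult_le_compat_l. left; apply exp_pos. apply HA. lra.
  eapply Rle_trans. do 2 (apply Rmult_le_compat_l; [left; apply exp_pos|]). apply DeltaF_lipschitz, Hflip.
  eapply Rle_trans. do 2 (apply Rmult_le_compat_l; [left; apply exp_pos|]).
  apply Rmult_le_compat_l; [exact HK|]. apply le_div_weight, HD, Hs.
  right. rewrite RInt_zeta_Z.
  replace (K * D * exp (Z t) * exp (a * t) * exp ((eta - a) * s))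
    with (K * D * (exp (Z t) * exp (a * t) * exp ((eta - a) * s))) by ring.
  replace (exp (Z t - Z s) * (exp (a * (t - s)) * (K * (D * exp (eta * s + Z s)))))
    with (K * D * (exp (Z t - Z s) * exp (a * (t - s)) * exp (eta * s + Z s))) by ring.
  f_equal. rewrite <- !exp_plus. f_equal. ring.
Qed.

Lemma kernel_B_diff_le u1 v1 u2 v2 D t s : s <= t -> t <= 0 -> wdist u1 v1 u2 v2 D ->
  vnorm (vsub (kernel B (DG u1 v1) t s) (kernel B (DG u2 v2) t s))
    <= K * D * exp (Z t) * exp (b * t) * exp ((eta - b) * s).
Proof.
  intros Hst Ht HD. unfold kernel, DG. rewrite vscale_vsub, mvmul_vsub, vnorm_scale, Rabs_right by (left; apply exp_pos).
  eapply Rle_trans. apply Rmult_le_compat_l. left; apply exp_pos. apply HB. lra.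
  eapply Rle_trans. do 2 (apply Rmult_le_compat_l; [left; apply exp_pos|]). apply DeltaF_lipschitz, Hglip.
  eapply Rle_trans. do 2 (apply Rmult_le_compat_l; [left; apply exp_pos|]).
  apply Rmult_le_compat_l; [exact HK|]. apply le_div_weight, HD. lra.
  right. rewrite RInt_zeta_Z.
  replace (K * D * exp (Z t) * exp (b * t) * exp ((eta - b) * s))
    with (K * D * (exp (Z t) * exp (b * t) * exp ((eta - b) * s))) by ring.
  replace (exp (Z t - Z s) * (exp (b * (t - s)) * (K * (D * exp (eta * s + Z s)))))
    with (K * D * (exp (Z t - Z s) * exp (b * (t - s)) * exp (eta * s + Z s))) by ring.
  f_equal. rewrite <- !exp_plus. f_equal. ring.
Qed.

Lemma lp_image_u_lipschitz u1 v1 u1' v1' u2 v2 u2' v2' D :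
  lp_image u1 v1 u1' v1' -> lp_image u2 v2 u2' v2' -> wdist u1 v1 u2 v2 D ->
  forall t, t <= 0 -> weight t * vnorm (vsub (u1' t) (u2' t)) <= K / (a - eta) * D.
Proof.
  intros S1 S2 HD t Ht.
  destruct (S1 t Ht) as [[I1 [HI1 E1]] _]. destruct (S2 t Ht) as [[I2 [HI2 E2]] _].
  pose proof (wdist_ge0 _ _ _ _ _ HD) as HD0.
  set (C := K * D * exp (Z t) * exp (a * t)).
  assert (HC : 0 <= C) by (unfold C; pose proof (exp_pos (Z t)); pose proof (exp_pos (a * t));
                           repeat apply Rmult_le_pos; lra).
  assert (Hv : vnorm (vsub (u1' t) (u2' t)) <= RInt (fun s => C * exp ((eta - a) * s)) t 0).
  { rewrite E1, E2, (vnorm_ext _ _ (vsub I1 I2)) by (intros; unfold vsub, vadd; ring).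
    apply vnorm_RInt_le with (gv := fun s => vsub (kernel A (DF u2 v2) t s) (kernel A (DF u1 v1) t s)); auto.
    - intros i. apply is_RInt_minus_swap; apply is_RInt_of_has; auto.
    - apply ex_RInt_exp_lin. lra.
    - intros s Hs. rewrite vnorm_sub_sym. apply kernel_A_diff_le; auto; lra. }
  eapply Rle_trans. apply Rmult_le_compat_l. left; apply weight_pos. exact Hv.
  eapply Rle_trans. apply Rmult_le_compat_l. left; apply weight_pos.
  apply RInt_exp_neg_lin_le; auto; lra.
  right. unfold C. replace (- (eta - a)) with (a - eta) by ring.
  replace (weight t * (K * D * exp (Z t) * exp (a * t) * exp ((eta - a) * t) / (a - eta)))
    with (K / (a - eta) * D * (weight t * exp (Z t) * exp (a * t) * exp ((eta - a) * t))) by (field; lra).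
  rewrite weight_mul_exp_Z, <- !exp_plus.
  replace (- eta * t + a * t + (eta - a) * t) with 0 by ring. rewrite exp_0. ring.
Qed.

Lemma lp_image_v_lipschitz u1 v1 u1' v1' u2 v2 u2' v2' D :
  lp_image u1 v1 u1' v1' -> lp_image u2 v2 u2' v2' -> wdist u1 v1 u2 v2 D ->
  forall t, t <= 0 -> weight t * vnorm (vsub (v1' t) (v2' t)) <= K / (eta - b) * D.
Proof.
  intros S1 S2 HD t Ht.
  destruct (S1 t Ht) as [_ HV1]. destruct (S2 t Ht) as [_ HV2].
  pose proof (wdist_ge0 _ _ _ _ _ HD) as HD0.
  set (C := K * D * exp (Z t) * exp (b * t)).
  assert (HC : 0 <= C) by (unfold C; pose proof (exp_pos (Z t)); pose proof (exp_pos (b * t));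
                           repeat apply Rmult_le_pos; lra).
  assert (Hex : forall u v v' i T, (forall i, has_improper_lower (fun s => kernel B (DG u v) t s i) t (v' t i)) ->
                 T <= t -> ex_RInt (fun s => kernel B (DG u v) t s i) T t).
  { intros u v v' i T H HT. destruct (proj1 (H i) T HT) as [pr]. apply ex_RInt_Reals_1; exact pr. }
  assert (Hlim : vnorm (vsub (v1' t) (v2' t)) <= C * exp ((eta - b) * t) / (eta - b)).
  { apply (vnorm_improper_le m (fun i s => kernel B (DG u1 v1) t s i) (fun i s => kernel B (DG u2 v2) t s i) t); auto.
    intros T HT. rewrite (vnorm_ext _ _ (fun i => RInt (fun s => kernel B (DG u1 v1) t s i) T t
                                                 - RInt (fun s => kernel B (DG u2 v2) t s i) T t))
      by (intros; rewrite !Defs_RInt_eq by (eapply Hex; eauto); reflexivity).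
    eapply Rle_trans; [|apply (RInt_exp_lin_le C (eta - b) T t); auto; lra].
    apply vnorm_RInt_le with (gv := fun s => vsub (kernel B (DG u1 v1) t s) (kernel B (DG u2 v2) t s)); auto.
    - intros i. apply (is_RInt_minus (V:=R_NormedModule));
        apply (RInt_correct (V:=R_CompleteNormedModule)); eapply Hex; eauto.
    - apply ex_RInt_exp_lin. lra.
    - intros s Hs. apply kernel_B_diff_le; auto; lra. }
  eapply Rle_trans. apply Rmult_le_compat_l. left; apply weight_pos. exact Hlim.
  right. unfold C.
  replace (weight t * (K * D * exp (Z t) * exp (b * t) * exp ((eta - b) * t) / (eta - b)))
    with (K / (eta - b) * D * (weight t * exp (Z t) * exp (b * t) * exp ((eta - b) * t))) by (field; lra).
  rewrite weight_mul_exp_Z, <- !exp_plus.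
  replace (- eta * t + b * t + (eta - b) * t) with 0 by ring. rewrite exp_0. ring.
Qed.

Definition rho := K / (a - eta) + K / (eta - b).

Lemma rho_range : 0 <= rho < 1.
Proof. unfold rho. split; auto. apply Rplus_le_le_0_compat; apply Rdiv_le_0_compat; lra. Qed.

Lemma lp_image_contraction u1 v1 u1' v1' u2 v2 u2' v2' D :
  lp_image u1 v1 u1' v1' -> lp_image u2 v2 u2' v2' -> wdist u1 v1 u2 v2 D ->
  wdist u1' v1' u2' v2' (rho * D).
Proof.
  intros S1 S2 HD t Ht. rewrite Rmult_plus_distr_l. unfold rho.
  pose proof (lp_image_u_lipschitz _ _ _ _ _ _ _ _ _ S1 S2 HD t Ht).
  pose proof (lp_image_v_lipschitz _ _ _ _ _ _ _ _ _ S1 S2 HD t Ht). lra.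
Qed.

Lemma wdist_eq_of_geometric u1 v1 u2 v2 C : (forall k, wdist u1 v1 u2 v2 (C * rho ^ k)) ->
  forall t, t <= 0 -> u1 t = u2 t /\ v1 t = v2 t.
Proof.
  intros H t Ht. pose proof (weight_pos t).
  pose proof (vnorm_ge0 _ (vsub (u1 t) (u2 t))). pose proof (vnorm_ge0 _ (vsub (v1 t) (v2 t))).
  assert (E : weight t * (vnorm (vsub (u1 t) (u2 t)) + vnorm (vsub (v1 t) (v2 t))) = 0).
  { pose proof (wdist_ge0 _ _ _ _ _ (H O)) as HC. rewrite pow_O, Rmult_1_r in HC.
    apply (le_geometric_eq0 _ C rho); auto. nra. apply rho_range. intros k. apply H; auto. }
  apply Rmult_integral in E. destruct E as [E|E]; [lra|].
  split; apply vsub_vnorm_eq0; lra.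
Qed.

Lemma wdist_of_in_Cminus u1 v1 u2 v2 :
  in_Cminus zeta eta u1 v1 -> in_Cminus zeta eta u2 v2 -> exists D, wdist u1 v1 u2 v2 D.
Proof.
  intros [_ [_ [[Mu1 H1] [Mv1 G1]]]] [_ [_ [[Mu2 H2] [Mv2 G2]]]].
  exists (Mu1 + Mu2 + (Mv1 + Mv2)). intros s Hs. pose proof (weight_pos s).
  pose proof (vnorm_sub_le _ (u1 s) (u2 s)). pose proof (vnorm_sub_le _ (v1 s) (v2 s)).
  specialize (H1 s Hs). specialize (H2 s Hs). specialize (G1 s Hs). specialize (G2 s Hs).
  unfold weight in *. nra.
Qed.

Lemma wdist_lp_fixed_points u1 v1 u2 v2 D :
  lp_image u1 v1 u1 v1 -> lp_image u2 v2 u2 v2 -> wdist u1 v1 u2 v2 D ->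
  forall k, wdist u1 v1 u2 v2 (D * rho ^ k).
Proof.
  intros S1 S2 HD k. induction k. { rewrite pow_O, Rmult_1_r. exact HD. }
  replace (D * rho ^ S k) with (rho * (D * rho ^ k)) by (simpl; ring).
  apply (lp_image_contraction _ _ _ _ _ _ _ _ _ S1 S2 IHk).
Qed.

Lemma lp_fixed_point_unique u v u' v' :
  in_Cminus zeta eta u v -> in_Cminus zeta eta u' v' -> lp_image u v u v -> lp_image u' v' u' v' ->
  forall t, t <= 0 -> u' t = u t /\ v' t = v t.
Proof.
  intros Hin Hin' S S'. destruct (wdist_of_in_Cminus _ _ _ _ Hin' Hin) as [D HD].
  apply (wdist_eq_of_geometric _ _ _ _ D). apply wdist_lp_fixed_points; auto.
Qed.

Lemma Z_0 : Z 0 = 0.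
Proof. unfold Z. rewrite Defs_RInt_eq by apply ex_RInt_zeta. exact (RInt_point 0 zeta). Qed.

(* Splitting [e^{A(t-s)} = e^{At} e^{-As}] separates the dependence on [t] and on [s]. *)
Lemma kernel_factor p (E : mat p) (D : R -> vec p) t s i :
  kernel E D t s i = fsum p (fun j => exp (Z t) * mexp E t i j * kernel E D 0 s j).
Proof.
  unfold kernel, vscale. rewrite !RInt_zeta_Z, Z_0, mvmul_mexp_sub.
  replace (0 - s) with (- s) by ring. unfold mvmul at 1. unfold Rminus. rewrite exp_plus.
  rewrite Rplus_0_l, Rmult_assoc, <- !fsum_scal. apply fsum_ext. intros j. unfold mvmul. ring.
Qed.

Lemma ex_RInt_kernel0 p (E : mat p) (h : vec n -> vec m -> vec p) Kh u v j x y :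
  lipschitz h Kh -> vcont u -> vcont v ->
  ex_RInt (fun s => kernel E (fun s => DeltaF h zeta xh yh (u s) (v s) s) 0 s j) x y.
Proof.
  intros Hh Hu Hv. apply ex_RInt_cadlag. unfold kernel, DeltaF.
  apply (cadlag_scaled_Ftr_diff zeta n m p h Kh (fun s => mexp E (0 - s)) (fun s => exp (Defs.RInt zeta s 0))
           (fun s => vadd (u s) (xh s)) xh (fun s => vadd (v s) (yh s)) yh j Hcadlag Hh).
  - intros; apply cont_at_mexp_sub.
  - intros t. apply cont_at_ext with (g := fun s => exp (Z 0 - Z s)). { intros; rewrite RInt_zeta_Z; auto. }
    apply cont_at_exp, cont_at_minus. apply cont_at_const. apply cont_at_Z.
  - apply vcont_vadd; auto. apply vcont_xh.
  - apply vcont_xh.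
  - apply vcont_vadd; auto. apply vcont_yh.
  - apply vcont_yh.
Qed.

Lemma is_RInt_kernel p (E : mat p) (D : R -> vec p) t x y i :
  (forall j, ex_RInt (fun s => kernel E D 0 s j) x y) ->
  is_RInt (fun s => kernel E D t s i) x y
    (fsum p (fun j => exp (Z t) * mexp E t i j * RInt (fun s => kernel E D 0 s j) x y)).
Proof.
  intros H. eapply is_RInt_ext; [|apply (is_RInt_fsum_lin p (fun j s => kernel E D 0 s j))].
  - intros s _. symmetry. apply kernel_factor.
  - intros j. apply (RInt_correct (V:=R_CompleteNormedModule)), H.
Qed.

Definition lp_u u v t : vec n :=
  vadd (hom_part t)
    (fun i => fsum n (fun j => exp (Z t) * mexp A t i j * RInt (fun s => kernel A (DF u v) 0 s j) 0 t)).

(* The [v]-component integrates from [-oo]: [int_{-oo}^t = int_{-oo}^0 + int_0^t]. *)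
Definition lp_v u v t : vec m := fun i =>
  fsum m (fun j => exp (Z t) * mexp B t i j *
    (RInt_neg_infty (fun s => kernel B (DG u v) 0 s j) + RInt (fun s => kernel B (DG u v) 0 s j) 0 t)).

Definition zero_n : R -> vec n := fun _ => vzero.
Definition zero_m : R -> vec m := fun _ => vzero.

Lemma lp_image_zero : lp_image zero_n zero_m hom_part zero_m.
Proof.
  assert (E : forall p (E : mat p) (h : vec n -> vec m -> vec p) t s i,
             kernel E (fun s => DeltaF h zeta xh yh (zero_n s) (zero_m s) s) t s i = 0).
  { intros. unfold kernel, zero_n, zero_m. rewrite DeltaF_vzero.
    unfold vscale, mvmul, vzero. rewrite (fsum_ext _ _ (fun _ => 0)) by (intros; ring).
    rewrite fsum_const0. ring. }
  intros t Ht. split.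
  - exists vzero. split.
    + intros i. apply has_RInt_of_is. eapply is_RInt_ext; [|apply is_RInt_R0]. intros. symmetry. apply E.
    + apply functional_extensionality. intros i. unfold hom_part, vadd, vzero. ring.
  - intros i. apply (has_improper_lower_ext (fun _ => 0)). { intros. symmetry. apply E. }
    split.
    + intros T HT. constructor. apply ex_RInt_Reals_0. eexists; apply is_RInt_R0.
    + intros eps He. exists 0. intros T HT. rewrite Defs_RInt_eq by (eexists; apply is_RInt_R0).
      rewrite (is_RInt_unique (V:=R_CompleteNormedModule) _ _ _ _ (is_RInt_R0 T t)).
      unfold zero_m, vzero. rewrite Rminus_0_r, Rabs_R0. auto.
Qed.

Lemma lp_image_ext u1 v1 u2 v2 u' v' : (forall s, s <= 0 -> u1 s = u2 s /\ v1 s = v2 s) ->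
  lp_image u1 v1 u' v' -> lp_image u2 v2 u' v'.
Proof.
  intros E S t Ht. destruct (S t Ht) as [[I [HI EI]] HV]. unfold DF, DG in *.
  assert (Ek : forall p (E : mat p) (h : vec n -> vec m -> vec p) s, s <= 0 ->
             kernel E (fun s => DeltaF h zeta xh yh (u1 s) (v1 s) s) t s
             = kernel E (fun s => DeltaF h zeta xh yh (u2 s) (v2 s) s) t s).
  { intros p E0 h s Hs. unfold kernel. destruct (E s Hs) as [-> ->]. reflexivity. }
  split.
  - exists I. split; auto. eapply vhas_RInt_ext; [|exact HI].
    intros s Hs. rewrite Rmin_right, Rmax_left in Hs by lra. apply Ek. lra.
  - intros i. eapply has_improper_lower_ext; [|apply HV]. intros s Hs. cbv beta. rewrite Ek; auto. lra.
Qed.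

Section Image.
Variables (u : R -> vec n) (v : R -> vec m) (M : R).
Hypotheses (Hu : vcont u) (Hv : vcont v) (HM : wdist u v zero_n zero_m M).

Lemma ex_RInt_kernel_A j x y : ex_RInt (fun s => kernel A (DF u v) 0 s j) x y.
Proof. apply (ex_RInt_kernel0 _ _ _ K); auto. Qed.

Lemma ex_RInt_kernel_B j x y : ex_RInt (fun s => kernel B (DG u v) 0 s j) x y.
Proof. apply (ex_RInt_kernel0 _ _ _ K); auto. Qed.

Lemma Rabs_kernel_B_le s j : s <= 0 -> Rabs (kernel B (DG u v) 0 s j) <= K * M * exp ((eta - b) * s).
Proof.
  intros Hs. eapply Rle_trans. apply Rabs_coord_le_vnorm.
  replace (kernel B (DG u v) 0 s) with (vsub (kernel B (DG u v) 0 s) (kernel B (DG zero_n zero_m) 0 s)).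
  - eapply Rle_trans. apply (kernel_B_diff_le _ _ _ _ M); auto; lra.
    rewrite Z_0, exp_0, Rmult_0_r, exp_0. lra.
  - apply functional_extensionality. intros i. unfold kernel, DG, zero_n, zero_m.
    rewrite DeltaF_vzero. unfold vsub, vscale, mvmul, vzero.
    rewrite (fsum_ext _ (fun j => _ * 0) (fun _ => 0)) by (intros; ring). rewrite fsum_const0. ring.
Qed.

Lemma lp_image_lp : lp_image u v (lp_u u v) (lp_v u v).
Proof.
  intros t Ht. split.
  - eexists. split; [|reflexivity]. intros i. apply has_RInt_of_is, is_RInt_kernel.
    intros; apply ex_RInt_kernel_A.
  - intros i.
    assert (Hex : forall T, ex_RInt (fun s => kernel B (DG u v) t s i) T t)
      by (intros T; eexists; apply is_RInt_kernel; intros; apply ex_RInt_kernel_B).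
    split.
    + intros T HT. constructor. apply ex_RInt_Reals_0, Hex.
    + intros eps He. set (Sc := fsum m (fun j => Rabs (exp (Z t) * mexp B t i j))).
      assert (HSc : 0 <= Sc) by (apply fsum_nonneg; intros; apply Rabs_pos).
      pose proof (wdist_ge0 _ _ _ _ _ HM) as HM0.
      destruct (exp_lin_small (Sc * (K * M) / (eta - b)) (eta - b) eps) as [T0 [HT0 HT0s]]; auto; try lra.
      { apply Rdiv_le_0_compat; [apply Rmult_le_pos, Rmult_le_pos|]; lra. }
      exists (Rmin T0 t). intros T HT. pose proof (Rmin_l T0 t). pose proof (Rmin_r T0 t).
      rewrite Defs_RInt_eq, (is_RInt_unique (V:=R_CompleteNormedModule) _ _ _ _
        (is_RInt_kernel _ B (DG u v) t T t i (fun j => ex_RInt_kernel_B j T t))) by auto.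
      unfold lp_v. rewrite <- fsum_sub.
      rewrite (fsum_ext _ _ (fun j => exp (Z t) * mexp B t i j *
                 (RInt (fun s => kernel B (DG u v) 0 s j) T 0 - RInt_neg_infty (fun s => kernel B (DG u v) 0 s j)))).
      2:{ intros j. rewrite (RInt_Chasles_R _ T 0 t) by apply ex_RInt_kernel_B. ring. }
      eapply Rle_lt_trans. apply (fsum_mul_abs_le m _ _ (K * M * exp ((eta - b) * T) / (eta - b))).
      { intros j. apply RInt_neg_infty_tail; try lra.
        - apply Rmult_le_pos; lra.
        - apply ex_RInt_kernel_B.
        - intros s Hs. apply Rabs_kernel_B_le; auto. }
      cbv beta. change (fsum m (fun j => Rabs (exp (Z t) * mexp B t i j))) with Sc.
      replace (Sc * (K * M * exp ((eta - b) * T) / (eta - b)))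
        with (Sc * (K * M) / (eta - b) * exp ((eta - b) * T)) by (field; lra).
      apply HT0s. lra.
Qed.

Lemma vcont_lp_u : vcont (lp_u u v).
Proof.
  intros j t. unfold lp_u, hom_part, vadd, vscale, mvmul. apply cont_at_plus.
  - apply cont_at_mult.
    + apply cont_at_ext with (g := fun s => exp (Z s)). { intros; reflexivity. } apply cont_at_exp, cont_at_Z.
    + apply cont_at_fsum. intros k. apply cont_at_mult. apply cont_at_mexp. apply cont_at_const.
  - apply cont_at_fsum. intros k. apply cont_at_mult. apply cont_at_mult.
    apply cont_at_exp, cont_at_Z. apply cont_at_mexp.
    apply cont_at_RInt. intros; apply ex_RInt_kernel_A.
Qed.

Lemma vcont_lp_v : vcont (lp_v u v).
Proof.
  intros j t. unfold lp_v. apply cont_at_fsum. intros k. apply cont_at_mult. apply cont_at_mult.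
  apply cont_at_exp, cont_at_Z. apply cont_at_mexp.
  apply cont_at_plus. apply cont_at_const. apply cont_at_RInt. intros; apply ex_RInt_kernel_B.
Qed.

Lemma weight_hom_part_le t : t <= 0 -> weight t * vnorm (hom_part t) <= vnorm u0.
Proof.
  intros Ht. unfold hom_part. rewrite vnorm_scale, Rabs_right by (left; apply exp_pos).
  eapply Rle_trans. apply Rmult_le_compat_l. left; apply weight_pos.
  apply Rmult_le_compat_l. left; apply exp_pos. apply HA; auto.
  replace (weight t * (exp (Defs.RInt zeta 0 t) * (exp (a * t) * vnorm u0)))
    with (weight t * exp (Z t) * exp (a * t) * vnorm u0) by (unfold Z; ring).
  rewrite weight_mul_exp_Z, <- exp_plus. rewrite <- (Rmult_1_l (vnorm u0)) at 2.
  apply Rmult_le_compat_r. apply vnorm_ge0. rewrite <- exp_0. apply exp_le. nra.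
Qed.

Lemma lp_in_Cminus : in_Cminus zeta eta (lp_u u v) (lp_v u v).
Proof.
  pose proof (lp_image_contraction _ _ _ _ _ _ _ _ _ lp_image_lp lp_image_zero HM) as HD.
  split; [|split; [|split]].
  - apply cont_neg_of_vcont, vcont_lp_u.
  - apply cont_neg_of_vcont, vcont_lp_v.
  - exists (vnorm u0 + rho * M). intros t Ht. specialize (HD t Ht). change (cminus_weight zeta eta t) with (weight t).
    pose proof (weight_pos t). pose proof (vnorm_ge0 _ (vsub (lp_v u v t) (zero_m t))).
    assert (weight t * vnorm (lp_u u v t)
            <= weight t * vnorm (hom_part t) + weight t * vnorm (vsub (lp_u u v t) (hom_part t))).
    { rewrite <- Rmult_plus_distr_l. apply Rmult_le_compat_l. lra. apply vnorm_le_sub. }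
    pose proof (weight_hom_part_le t Ht). nra.
  - exists (rho * M). intros t Ht. specialize (HD t Ht). change (cminus_weight zeta eta t) with (weight t).
    pose proof (vnorm_ge0 _ (vsub (lp_u u v t) (hom_part t))). pose proof (weight_pos t).
    rewrite (vnorm_ext _ (vsub _ (zero_m t)) (lp_v u v t)) in HD by (intros; unfold vsub, zero_m, vzero; ring).
    nra.
Qed.

End Image.

Definition lp_map (p : (R -> vec n) * (R -> vec m)) : (R -> vec n) * (R -> vec m) :=
  (lp_u (extend_const (fst p)) (extend_const (snd p)), lp_v (extend_const (fst p)) (extend_const (snd p))).

Lemma zero_in_Cminus : in_Cminus zeta eta zero_n zero_m.
Proof.
  assert (Hc : forall p, cont_neg (fun _ : R => @vzero p))
    by (intros p; apply cont_neg_of_vcont; intros j t; apply cont_at_const).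
  unfold zero_n, zero_m. repeat split; auto; exists 0; intros; rewrite vnorm_vzero; lra.
Qed.

(* The values of [(u, v)] on [(0, +oo)] are irrelevant; extending them constantly makes the
   integrands cadlag on the whole line. *)
Lemma lp_map_spec (u : R -> vec n) (v : R -> vec m) : in_Cminus zeta eta u v ->
  in_Cminus zeta eta (fst (lp_map (u, v))) (snd (lp_map (u, v))) /\
  lp_image u v (fst (lp_map (u, v))) (snd (lp_map (u, v))).
Proof.
  intros Hin. pose proof Hin as [Hcu [Hcv _]].
  destruct (wdist_of_in_Cminus _ _ _ _ Hin zero_in_Cminus) as [M HM].
  assert (E : forall s, s <= 0 -> extend_const u s = u s /\ extend_const v s = v s)
    by (intros; unfold extend_const; rewrite Rmin_left; auto).
  assert (HMe : wdist (extend_const u) (extend_const v) zero_n zero_m M)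
    by (intros s Hs; destruct (E s Hs) as [-> ->]; auto).
  simpl. split.
  - apply (lp_in_Cminus _ _ M); auto; apply vcont_extend_const; auto.
  - apply (lp_image_ext (extend_const u) (extend_const v)); auto.
    apply (lp_image_lp _ _ M); auto; apply vcont_extend_const; auto.
Qed.

Lemma wdist_sym u1 v1 u2 v2 D : wdist u1 v1 u2 v2 D -> wdist u2 v2 u1 v1 D.
Proof. intros H s Hs. rewrite (vnorm_sub_sym _ (u2 s)), (vnorm_sub_sym _ (v2 s)). auto. Qed.

Lemma wdist_triangle u1 v1 u2 v2 u3 v3 D1 D2 :
  wdist u1 v1 u2 v2 D1 -> wdist u2 v2 u3 v3 D2 -> wdist u1 v1 u3 v3 (D1 + D2).
Proof.
  intros H1 H2 s Hs. specialize (H1 s Hs). specialize (H2 s Hs). pose proof (weight_pos s).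
  pose proof (vnorm_sub_triangle _ (u1 s) (u2 s) (u3 s)).
  pose proof (vnorm_sub_triangle _ (v1 s) (v2 s) (v3 s)). nra.
Qed.

Lemma lp_image_ext_image u v u1' v1' u2' v2' : (forall t, t <= 0 -> u1' t = u2' t /\ v1' t = v2' t) ->
  lp_image u v u1' v1' -> lp_image u v u2' v2'.
Proof.
  intros E S t Ht. destruct (S t Ht) as [[I [HI EI]] HV]. destruct (E t Ht) as [E1 E2].
  split. exists I. rewrite <- E1. auto. intros i. rewrite <- E2. auto.
Qed.

Fixpoint picard k : (R -> vec n) * (R -> vec m) :=
  match k with O => (zero_n, zero_m) | S k => lp_map (picard k) end.

Lemma picard_in_Cminus k : in_Cminus zeta eta (fst (picard k)) (snd (picard k)).
Proof.
  induction k. apply zero_in_Cminus.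
  simpl. rewrite (surjective_pairing (picard k)). apply lp_map_spec. auto.
Qed.

Lemma picard_lp_image k : lp_image (fst (picard k)) (snd (picard k)) (fst (picard (S k))) (snd (picard (S k))).
Proof. simpl. rewrite (surjective_pairing (picard k)) at 3 4. apply lp_map_spec, picard_in_Cminus. Qed.

Lemma picard_wdist_succ : exists C, forall k,
  wdist (fst (picard (S k))) (snd (picard (S k))) (fst (picard k)) (snd (picard k)) (C * rho ^ k).
Proof.
  destruct (wdist_of_in_Cminus _ _ _ _ (picard_in_Cminus 1) (picard_in_Cminus 0)) as [C HC].
  exists C. intros k. induction k. { rewrite pow_O, Rmult_1_r. exact HC. }
  replace (C * rho ^ S k) with (rho * (C * rho ^ k)) by (simpl; ring).
  apply (lp_image_contraction _ _ _ _ _ _ _ _ _ (picard_lp_image (S k)) (picard_lp_image k) IHk).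
Qed.

Definition seq_lim {p} (Uk : nat -> R -> vec p) t : vec p := fun i => real (Lim_seq (fun j => Uk j t i)).

Lemma weight_seq_lim_le p (Uk : nat -> R -> vec p) C :
  (forall k t, t <= 0 -> weight t * vnorm (vsub (Uk (S k) t) (Uk k t)) <= C * rho ^ k) ->
  forall k t, t <= 0 -> weight t * vnorm (vsub (seq_lim Uk t) (Uk k t)) <= INR p * C / (1 - rho) * rho ^ k.
Proof.
  intros HU k t Ht. pose proof (weight_pos t) as Hw. pose proof rho_range as Hr.
  assert (HC : 0 <= C).
  { specialize (HU O t Ht). rewrite pow_O, Rmult_1_r in HU.
    pose proof (vnorm_ge0 _ (vsub (Uk 1%nat t) (Uk O t))). nra. }
  assert (Hc : forall i, Rabs (seq_lim Uk t i - Uk k t i) <= rho ^ k * (C / weight t) / (1 - rho)).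
  { intros i. apply (geometric_cauchy_limit (fun j => Uk j t i) (C / weight t) rho); auto.
    apply Rdiv_le_0_compat; lra. intros j.
    eapply Rle_trans. apply (Rabs_coord_le_vnorm _ (vsub (Uk (S j) t) (Uk j t)) i).
    apply Rmult_le_reg_l with (weight t); auto.
    replace (weight t * (rho ^ j * (C / weight t))) with (C * rho ^ j) by (field; lra). apply HU; auto. }
  eapply Rle_trans. apply Rmult_le_compat_l. left; auto. apply vnorm_le_dim_mul, Hc.
  right. field. split; lra.
Qed.

Lemma cont_neg_seq_lim p (Uk : nat -> R -> vec p) c0 : 0 <= c0 -> (forall k, cont_neg (Uk k)) ->
  (forall k t, t <= 0 -> weight t * vnorm (vsub (seq_lim Uk t) (Uk k t)) <= c0 * rho ^ k) ->
  cont_neg (seq_lim Uk).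
Proof.
  intros Hc0 Hk Hb t Ht eps He.
  (* uniform convergence on a neighbourhood of [t], where the weight is bounded below *)
  assert (Hwi : exists d1, 0 < d1 /\ forall s, Rabs (s - t) < d1 -> exp (eta * s + Z s) < exp (eta * t + Z t) + 1).
  { assert (C : cont_at (fun s => exp (eta * s + Z s)) t).
    { apply cont_at_exp, cont_at_plus. apply cont_at_mult. apply cont_at_const. apply cont_at_id. apply cont_at_Z. }
    destruct (C 1 Rlt_0_1) as [d [Hd G]]. exists d. split; auto.
    intros s Hs. specialize (G s Hs). apply Rabs_def2 in G. lra. }
  destruct Hwi as [d1 [Hd1 Gw]]. set (Wt := exp (eta * t + Z t) + 1).
  assert (HWt : 0 < Wt) by (unfold Wt; pose proof (exp_pos (eta * t + Z t)); lra).
  destruct (pow_lt1_small rho (c0 * Wt) (eps / 3) rho_range (Rmult_le_pos _ _ Hc0 (Rlt_le _ _ HWt))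
             ltac:(lra)) as [N HN].
  assert (Hpt : forall s, s <= 0 -> Rabs (s - t) < d1 -> vnorm (vsub (seq_lim Uk s) (Uk N s)) < eps / 3).
  { intros s Hs Hst. eapply Rle_lt_trans. exact (le_div_weight _ _ _ (Hb N s Hs)).
    eapply Rle_lt_trans; [|exact HN].
    replace (c0 * Wt * rho ^ N) with (c0 * rho ^ N * Wt) by ring.
    apply Rmult_le_compat_l. apply Rmult_le_pos; auto. apply pow_le, rho_range. left; apply Gw; auto. }
  destruct (Hk N t Ht (eps / 3) ltac:(lra)) as [d2 [Hd2 G2]].
  exists (Rmin d1 d2). split. apply Rmin_pos; auto. intros s Hs Hst.
  pose proof (Rmin_l d1 d2). pose proof (Rmin_r d1 d2).
  eapply Rle_lt_trans. apply (vnorm_sub_triangle _ _ (Uk N s)).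
  eapply Rle_lt_trans. apply Rplus_le_compat_l. apply (vnorm_sub_triangle _ _ (Uk N t)).
  assert (vnorm (vsub (seq_lim Uk s) (Uk N s)) < eps / 3) by (apply Hpt; auto; lra).
  assert (vnorm (vsub (Uk N s) (Uk N t)) < eps / 3) by (apply G2; auto; lra).
  assert (vnorm (vsub (Uk N t) (seq_lim Uk t)) < eps / 3).
  { rewrite vnorm_sub_sym. apply Hpt; auto. rewrite Rminus_diag, Rabs_R0; auto. }
  lra.
Qed.

Lemma wdist_fst u1 v1 u2 v2 D : wdist u1 v1 u2 v2 D ->
  forall s, s <= 0 -> weight s * vnorm (vsub (u1 s) (u2 s)) <= D.
Proof.
  intros H s Hs. specialize (H s Hs). pose proof (weight_pos s).
  pose proof (vnorm_ge0 _ (vsub (v1 s) (v2 s))). nra.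
Qed.

Lemma wdist_snd u1 v1 u2 v2 D : wdist u1 v1 u2 v2 D ->
  forall s, s <= 0 -> weight s * vnorm (vsub (v1 s) (v2 s)) <= D.
Proof.
  intros H s Hs. specialize (H s Hs). pose proof (weight_pos s).
  pose proof (vnorm_ge0 _ (vsub (u1 s) (u2 s))). nra.
Qed.

Definition picard_u k := fst (picard k).
Definition picard_v k := snd (picard k).

Lemma picard_limit_close : exists c0, 0 <= c0 /\
  forall k, wdist (seq_lim picard_u) (seq_lim picard_v) (picard_u k) (picard_v k) (c0 * rho ^ k).
Proof.
  destruct picard_wdist_succ as [C HC]. pose proof rho_range as Hr.
  assert (HC0 : 0 <= C) by (pose proof (wdist_ge0 _ _ _ _ _ (HC O)) as H; rewrite pow_O, Rmult_1_r in H; auto).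
  pose proof (weight_seq_lim_le _ picard_u C (fun k => wdist_fst _ _ _ _ _ (HC k))) as Hu.
  pose proof (weight_seq_lim_le _ picard_v C (fun k => wdist_snd _ _ _ _ _ (HC k))) as Hv.
  exists ((INR n + INR m) * C / (1 - rho)). split.
  { apply Rdiv_le_0_compat; [apply Rmult_le_pos|]; try lra. pose proof (pos_INR n); pose proof (pos_INR m); lra. }
  intros k s Hs. specialize (Hu k s Hs). specialize (Hv k s Hs).
  replace ((INR n + INR m) * C / (1 - rho) * rho ^ k)
    with (INR n * C / (1 - rho) * rho ^ k + INR m * C / (1 - rho) * rho ^ k) by (field; lra).
  lra.
Qed.

Lemma picard_limit_in_Cminus : in_Cminus zeta eta (seq_lim picard_u) (seq_lim picard_v).
Proof.
  destruct picard_limit_close as [c0 [Hc0 Hlim]].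
  assert (H0 : wdist (seq_lim picard_u) (seq_lim picard_v) zero_n zero_m c0)
    by (pose proof (Hlim O) as H; rewrite pow_O, Rmult_1_r in H; exact H).
  split; [|split; [|split]].
  - apply (cont_neg_seq_lim _ _ c0); auto. intros k; apply picard_in_Cminus.
    intros k; exact (wdist_fst _ _ _ _ _ (Hlim k)).
  - apply (cont_neg_seq_lim _ _ c0); auto. intros k; apply picard_in_Cminus.
    intros k; exact (wdist_snd _ _ _ _ _ (Hlim k)).
  - exists c0. intros t Ht. pose proof (wdist_fst _ _ _ _ _ H0 t Ht) as H.
    rewrite (vnorm_ext _ _ (seq_lim picard_u t)) in H by (intros; unfold vsub, zero_n, vzero; ring). exact H.
  - exists c0. intros t Ht. pose proof (wdist_snd _ _ _ _ _ H0 t Ht) as H.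
    rewrite (vnorm_ext _ _ (seq_lim picard_v t)) in H by (intros; unfold vsub, zero_m, vzero; ring). exact H.
Qed.

Lemma lp_fixed_point_exists : exists u v, in_Cminus zeta eta u v /\ lp_image u v u v.
Proof.
  set (ul := seq_lim picard_u). set (vl := seq_lim picard_v).
  destruct picard_limit_close as [c0 [Hc0 Hlim]].
  destruct (lp_map_spec ul vl picard_limit_in_Cminus) as [_ HS].
  exists ul, vl. split. apply picard_limit_in_Cminus.
  apply (lp_image_ext_image _ _ (fst (lp_map (ul, vl))) (snd (lp_map (ul, vl)))); auto.
  (* [T(ul, vl)] is within [rho c0 rho^k] of [T(u_k, v_k) = (u_{k+1}, v_{k+1})], itself within [c0 rho^{k+1}] of [(ul, vl)] *)
  apply (wdist_eq_of_geometric _ _ _ _ (2 * c0 * rho)). intros k.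
  replace (2 * c0 * rho * rho ^ k) with (rho * (c0 * rho ^ k) + c0 * rho ^ S k) by (simpl; ring).
  eapply wdist_triangle.
  - apply (lp_image_contraction _ _ _ _ _ _ _ _ _ HS (picard_lp_image k) (Hlim k)).
  - apply wdist_sym, (Hlim (S k)).
Qed.

End LyapunovPerron.

Lemma lipschitz_Rmax0 p q r (h : vec p -> vec q -> vec r) K : lipschitz h K -> lipschitz h (Rmax K 0).
Proof.
  intros Hh x1 y1 x2 y2. eapply Rle_trans. apply Hh. apply Rmult_le_compat_r.
  pose proof (vnorm_ge0 _ (vsub x1 x2)); pose proof (vnorm_ge0 _ (vsub y1 y2)); lra. apply Rmax_l.
Qed.

Theorem lemma4p2 (n m : nat) (A : mat n) (B : mat m) (a b K : R)
  (f : vec n -> vec m -> vec n) (g : vec n -> vec m -> vec m)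
  (zeta : R -> R)
  (Hcadlag : cadlag zeta) (Hsub : sublinear zeta) (Hmean : zero_mean zeta)
  (Hba : b < 0 < a)
  (HA : forall t x, t <= 0 -> vnorm (mvmul (mexp A t) x) <= exp (a * t) * vnorm x)
  (HB : forall t y, 0 <= t -> vnorm (mvmul (mexp B t) y) <= exp (b * t) * vnorm y)
  (Hf0 : f vzero vzero = vzero) (Hg0 : g vzero vzero = vzero)
  (Hflip : lipschitz f K) (Hglip : lipschitz g K)
  (x0 : vec n) (y0 : vec m) (xh : R -> vec n) (yh : R -> vec m)
  (Horbit : RDE_solution A B f g zeta x0 y0 xh yh)
  (eta : R) (Heta : 0 < eta) (Hbeta : b < eta < a)
  (Hrho : K / (a - eta) + K / (eta - b) < 1) :
  forall u0 : vec n,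
    exists (u : R -> vec n) (v : R -> vec m),
      in_Cminus zeta eta u v /\ solves_IS A B f g zeta xh yh u0 u v /\
      forall (u' : R -> vec n) (v' : R -> vec m),
        in_Cminus zeta eta u' v' -> solves_IS A B f g zeta xh yh u0 u' v' ->
        forall t, t <= 0 -> u' t = u t /\ v' t = v t.
Proof.
  intros u0. set (K' := Rmax K 0).
  assert (HK' : 0 <= K') by apply Rmax_r.
  assert (Hrho' : K' / (a - eta) + K' / (eta - b) < 1).
  { unfold K', Rmax. destruct (Rle_dec K 0); auto. unfold Rdiv; rewrite !Rmult_0_l; lra. }
  pose proof (lipschitz_Rmax0 _ _ _ f K Hflip) as Hf'. pose proof (lipschitz_Rmax0 _ _ _ g K Hglip) as Hg'.
  destruct (lp_fixed_point_exists n m A B a b K' f g zeta Hcadlag HA HB Hf' Hg' x0 y0 xh yh Horbit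
              eta Hbeta HK' Hrho' u0) as [u [v [Hin HS]]].
  exists u, v. split; [exact Hin|]. split; [exact HS|].
  intros u' v' Hin' HS'.
  exact (lp_fixed_point_unique n m A B a b K' f g zeta Hcadlag HA HB Hf' Hg' xh yh
           eta Hbeta HK' Hrho' u0 u v u' v' Hin Hin' HS HS').
Qed.
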